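(* Let $k_1,k_2,m$ be positive integers and $\phi_1\in J_{k_1,m}$, $\phi_2\in J_{k_2,m}$ (classical Jacobi forms). Define $$H(\phi_1,\phi_2)(\tau,z_1,z_2)=\sum_{\epsilon\in\mathcal O_K^\times}\Bigl(\phi_1\bigl(\tau,\tfrac12(z_1+z_2)\bigr)\,\phi_2\bigl(\tau,\tfrac i2(z_1-z_2)\bigr)\Bigr)\Big|_{k_1+k_2}\epsilon I.$$ Then $H(\phi_1,\phi_2)\in J^1_{k_1+k_2,m}(\mathcal O_K)$. If moreover $\phi_1,\phi_2$ are cusp forms, then $H(\phi_1,\phi_2)$ is a cusp form.
   Context: Notation: $\mathcal H$ is the upper half plane, $e(x)=e^{2\pi i x}$, $K=\mathbb Q(i)$, $\mathcal O_K=\mathbb Z[i]$, $\mathcal O_K^\times=\{\pm1,\pm i\}$, $N(x)=x\bar x$, $\mathcal O_K^\sharp=\frac i2\mathcal O_K$. $J_{k,m}$ denotes the space of classical (Eichler–Zagier) Jacobi forms of weight $k$ and index $m$ on $SL(2,\mathbb Z)\ltimes\mathbb Z^2$. For a function $\psi$ on $\mathcal H\times\mathbb C^2$ and $\epsilon\in\mathcal O_K^\times$, $(\psi|_k\epsilon I)(\tau,z_1,z_2)=\epsilon^{-k}\psi(\tau,\epsilon z_1,\bar\epsilon z_2)$. For $M=\begin{pmatrix}a&b\\c&d\end{pmatrix}\in SL(2,\mathbb Z)$, $(\phi|_{k,m}M)(\tau,z_1,z_2)=(c\tau+d)^{-k}e^{-2\pi i m c z_1z_2/(c\tau+d)}\phi\bigl(M\tau,\tfrac{z_1}{c\tau+d},\tfrac{z_2}{c\tau+d}\bigr)$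 and for $\lambda,\mu\in\mathcal O_K$, $(\phi|_m[\lambda,\mu])(\tau,z_1,z_2)=e^{2\pi i m(N(\lambda)\tau+\bar\lambda z_1+\lambda z_2)}\phi(\tau,z_1+\lambda\tau+\mu,z_2+\bar\lambda\tau+\bar\mu)$. $J^1_{k,m}(\mathcal O_K)$ is the space of holomorphic $\phi:\mathcal H\times\mathbb C^2\to\mathbb C$ with $\phi|_{k,m}M=\phi$ for all $M\in SL(2,\mathbb Z)$, $\phi|_m[\lambda,\mu]=\phi$ for all $\lambda,\mu\in\mathcal O_K$, and with a Fourier expansion $\phi=\sum_{n\ge0}\sum_{r\in\mathcal O_K^\sharp,\,nm\ge N(r)}c_\phi(n,r)e(n\tau+rz_1+\bar rz_2)$; it is a cusp form if $c_\phi(n,r)=0$ whenever $nm=N(r)$. *)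

From Stdlib Require Import Reals Lra Lia ZArith List.
Import ListNotations.
Open Scope R_scope.

Definition CC : Type := (R * R)%type.
Definition Cre (z : CC) : R := fst z.
Definition Cim (z : CC) : R := snd z.
Definition RtoC (x : R) : CC := (x, 0).
Definition C0 : CC := (0, 0).
Definition C1 : CC := (1, 0).
Definition Ci : CC := (0, 1).
Definition Cadd (z w : CC) : CC := (Cre z + Cre w, Cim z + Cim w).
Definition Copp (z : CC) : CC := (- Cre z, - Cim z).
Definition Csub (z w : CC) : CC := Cadd z (Copp w).
Definition Cmul (z w : CC) : CC :=
  (Cre z * Cre w - Cim z * Cim w, Cre z * Cim w + Cim z * Cre w).
Definition Cconj (z : CC) : CC := (Cre z, - Cim z).
Definition Nrm (z : CC) : R := Cre z * Cre z + Cim z * Cim z.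
Definition Cnorm (z : CC) : R := sqrt (Nrm z).
Definition Cinv (z : CC) : CC := (Cre z / Nrm z, - Cim z / Nrm z).
Definition Cdiv (z w : CC) : CC := Cmul z (Cinv w).
Fixpoint Cpow (z : CC) (n : nat) : CC :=
  match n with O => C1 | S n' => Cmul z (Cpow z n') end.
Definition Cexp (z : CC) : CC := (exp (Cre z) * cos (Cim z), exp (Cre z) * sin (Cim z)).
Definition CZ (a : Z) : CC := RtoC (IZR a).
Definition Cnat (n : nat) : CC := RtoC (INR n).
Definition Cgauss (a b : Z) : CC := (IZR a, IZR b).

Definition ee (x : CC) : CC := Cexp (Cmul (Cmul (RtoC (2 * PI)) Ci) x).

Definition inH (t : CC) : Prop := 0 < Cim t.

Definition Cdiff_at (g : CC -> CC) (a : CC) : Prop :=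
  exists l : CC, forall eps, 0 < eps -> exists delta, 0 < delta /\
    forall h, 0 < Cnorm h < delta ->
      Cnorm (Csub (Cdiv (Csub (g (Cadd a h)) (g a)) h) l) < eps.

(* holomorphic on H x C : jointly continuous and complex differentiable in
   each variable separately (equivalent to holomorphy by Osgood's lemma) *)
Definition holo2 (f : CC -> CC -> CC) : Prop :=
  (forall t z, inH t ->
     forall eps, 0 < eps -> exists delta, 0 < delta /\
       forall t' z', Cnorm (Csub t' t) < delta -> Cnorm (Csub z' z) < delta ->
         Cnorm (Csub (f t' z') (f t z)) < eps)
  /\ (forall t z, inH t -> Cdiff_at (fun s => f s z) t /\ Cdiff_at (fun w => f t w) z).

Definition holo3 (f : CC -> CC -> CC -> CC) : Prop :=
  (forall t z1 z2, inH t ->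
     forall eps, 0 < eps -> exists delta, 0 < delta /\
       forall t' z1' z2', Cnorm (Csub t' t) < delta -> Cnorm (Csub z1' z1) < delta ->
         Cnorm (Csub z2' z2) < delta ->
         Cnorm (Csub (f t' z1' z2') (f t z1 z2)) < eps)
  /\ (forall t z1 z2, inH t ->
        Cdiff_at (fun s => f s z1 z2) t /\ Cdiff_at (fun w => f t w z2) z1
        /\ Cdiff_at (fun w => f t z1 w) z2).

Fixpoint Csum (l : list CC) : CC :=
  match l with [] => C0 | x :: l' => Cadd x (Csum l') end.

(* the family a is summable (as an unordered sum, i.e. along the net of finite
   subsets) with sum S *)
Definition has_usum {I : Type} (a : I -> CC) (S : CC) : Prop :=
  forall eps, 0 < eps -> exists F0 : list I, forall F : list I,
    NoDup F -> incl F0 F -> Cnorm (Csub (Csum (map a F)) S) < eps.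

Definition isSL2 (a b c d : Z) : Prop := (a * d - b * c = 1)%Z.
Definition mobius (a b c d : Z) (t : CC) : CC :=
  Cdiv (Cadd (Cmul (CZ a) t) (CZ b)) (Cadd (Cmul (CZ c) t) (CZ d)).

Definition slash_cl (k m : nat) (a b c d : Z) (phi : CC -> CC -> CC) : CC -> CC -> CC :=
  fun t z =>
    let j := Cadd (Cmul (CZ c) t) (CZ d) in
    Cmul (Cmul (Cinv (Cpow j k))
               (ee (Copp (Cdiv (Cmul (Cmul (Cnat m) (CZ c)) (Cmul z z)) j))))
         (phi (mobius a b c d t) (Cdiv z j)).

Definition heis_cl (m : nat) (l mu : Z) (phi : CC -> CC -> CC) : CC -> CC -> CC :=
  fun t z =>
    Cmul (ee (Cmul (Cnat m) (Cadd (Cmul (CZ (l * l)) t) (Cmul (CZ (2 * l)) z))))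
         (phi t (Cadd z (Cadd (Cmul (CZ l) t) (CZ mu)))).

Definition fourier_cl (phi : CC -> CC -> CC) (c : nat -> Z -> CC) : Prop :=
  forall t z, inH t ->
    has_usum (fun p : nat * Z =>
                Cmul (c (fst p) (snd p))
                     (ee (Cadd (Cmul (Cnat (fst p)) t) (Cmul (CZ (snd p)) z))))
             (phi t z).

Definition JacobiForm (k m : nat) (phi : CC -> CC -> CC) : Prop :=
  holo2 phi
  /\ (forall a b c d, isSL2 a b c d -> forall t z, inH t ->
        slash_cl k m a b c d phi t z = phi t z)
  /\ (forall l mu t z, inH t -> heis_cl m l mu phi t z = phi t z)
  /\ exists coef : nat -> Z -> CC,
       (forall n r, ~ (IZR r * IZR r <= 4 * INR n * INR m) -> coef n r = C0)
       /\ fourier_cl phi coef.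

Definition JacobiCuspForm (k m : nat) (phi : CC -> CC -> CC) : Prop :=
  JacobiForm k m phi
  /\ forall coef, fourier_cl phi coef ->
       forall n r, IZR r * IZR r = 4 * INR n * INR m -> coef n r = C0.

(* the units of O_K = Z[i] *)
Definition units_OK : list CC := [C1; Copp C1; Ci; Copp Ci].

Definition slash_unit (k : nat) (eps : CC) (psi : CC -> CC -> CC -> CC) : CC -> CC -> CC -> CC :=
  fun t z1 z2 => Cmul (Cinv (Cpow eps k)) (psi t (Cmul eps z1) (Cmul (Cconj eps) z2)).

Definition slash_h (k m : nat) (a b c d : Z) (phi : CC -> CC -> CC -> CC) : CC -> CC -> CC -> CC :=
  fun t z1 z2 =>
    let j := Cadd (Cmul (CZ c) t) (CZ d) in
    Cmul (Cmul (Cinv (Cpow j k))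
               (ee (Copp (Cdiv (Cmul (Cmul (Cnat m) (CZ c)) (Cmul z1 z2)) j))))
         (phi (mobius a b c d t) (Cdiv z1 j) (Cdiv z2 j)).

(* lambda, mu in O_K *)
Definition heis_h (m : nat) (l mu : CC) (phi : CC -> CC -> CC -> CC) : CC -> CC -> CC -> CC :=
  fun t z1 z2 =>
    Cmul (ee (Cmul (Cnat m)
                (Cadd (Cadd (Cmul (RtoC (Nrm l)) t) (Cmul (Cconj l) z1)) (Cmul l z2))))
         (phi t (Cadd z1 (Cadd (Cmul l t) mu))
                (Cadd z2 (Cadd (Cmul (Cconj l) t) (Cconj mu)))).

(* O_K^sharp = (i/2) O_K; its element (i/2)(a + b i) *)
Definition sharp_elt (ab : Z * Z) : CC :=
  Cmul (Cmul Ci (RtoC (1/2))) (Cgauss (fst ab) (snd ab)).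

Definition fourier_h (phi : CC -> CC -> CC -> CC) (c : nat -> Z * Z -> CC) : Prop :=
  forall t z1 z2, inH t ->
    has_usum (fun p : nat * (Z * Z) =>
                let r := sharp_elt (snd p) in
                Cmul (c (fst p) (snd p))
                     (ee (Cadd (Cadd (Cmul (Cnat (fst p)) t) (Cmul r z1))
                               (Cmul (Cconj r) z2))))
             (phi t z1 z2).

Definition HermJacobiForm (k m : nat) (phi : CC -> CC -> CC -> CC) : Prop :=
  holo3 phi
  /\ (forall a b c d, isSL2 a b c d -> forall t z1 z2, inH t ->
        slash_h k m a b c d phi t z1 z2 = phi t z1 z2)
  /\ (forall l1 l2 mu1 mu2 t z1 z2, inH t ->
        heis_h m (Cgauss l1 l2) (Cgauss mu1 mu2) phi t z1 z2 = phi t z1 z2)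
  /\ exists coef : nat -> Z * Z -> CC,
       (forall n ab, ~ (Nrm (sharp_elt ab) <= INR n * INR m) -> coef n ab = C0)
       /\ fourier_h phi coef.

Definition HermJacobiCuspForm (k m : nat) (phi : CC -> CC -> CC -> CC) : Prop :=
  HermJacobiForm k m phi
  /\ forall coef, fourier_h phi coef ->
       forall n ab, Nrm (sharp_elt ab) = INR n * INR m -> coef n ab = C0.

Definition prodF (phi1 phi2 : CC -> CC -> CC) : CC -> CC -> CC -> CC :=
  fun t z1 z2 =>
    Cmul (phi1 t (Cmul (RtoC (1/2)) (Cadd z1 z2)))
         (phi2 t (Cmul (Cmul Ci (RtoC (1/2))) (Csub z1 z2))).

Definition Hmap (k1 k2 : nat) (phi1 phi2 : CC -> CC -> CC) : CC -> CC -> CC -> CC :=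
  fun t z1 z2 =>
    Csum (map (fun eps => slash_unit (k1 + k2) eps (prodF phi1 phi2) t z1 z2) units_OK).

(** The [eps]-summand equals [eps^-k phi1(tau, w1) phi2(tau, w2)] with
    [w1 = (eps z1 + conj(eps) z2)/2] and [w2 = i (eps z1 - conj(eps) z2)/2].
    - Modularity: [w1^2 + w2^2 = N(eps) z1 z2 = z1 z2], so the index factors
      of [phi1] and [phi2] multiply to the Hermitian one.
    - Heisenberg invariance: a shift by Gaussian [(l, mu)] shifts [w1] by
      [Re(eps l) tau + Re(eps mu)] and [w2] by [-Im(eps l) tau - Im(eps mu)].
    - Holomorphy survives linear substitutions, products and sums.
    - The Fourier expansion is the Cauchy product of the classical ones,
      re-indexed by the norm-preserving bijection [ab = -i eps (r1 + i r2)] of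
      [Z^2]; the support condition [r^2 <= 4nm] of the factors yields
      [N(sharp ab) <= nm], with equality excluded for cusp forms.
    As [HermJacobiCuspForm] speaks about every Fourier expansion, the cusp
    statement also needs the uniqueness of Hermitian Fourier coefficients,
    proved by a discrete orthogonality argument. *)

From Stdlib Require Import Reals Lra Lia ZArith List Permutation Classical FunctionalExtensionality.
Import ListNotations.
Open Scope R_scope.

(** * Complex arithmetic *)

Lemma CC_eq (a b c d : R) : a = c -> b = d -> (a, b) = (c, d).
Proof. intros -> ->; reflexivity. Qed.

Ltac cexpand := unfold Csub, Cdiv in *;
  unfold Cmul, Cadd, Copp, Cconj, RtoC, CZ, C0, C1, Ci, Cgauss, Cnat, Nrm in *;
  unfold Cre, Cim in *; simpl in *.
Ltac csplit := repeat match goal with z : CC |- _ => destruct z end.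

Lemma CC_ring : ring_theory C0 C1 Cadd Cmul Csub Copp (@eq CC).
Proof. constructor; intros; csplit; cexpand; apply CC_eq; ring. Qed.
Add Ring CCring : CC_ring.

Lemma CZ_mul a b : CZ (a * b) = Cmul (CZ a) (CZ b).
Proof. cexpand; rewrite mult_IZR; apply CC_eq; ring. Qed.

Lemma CZ_opp a : CZ (- a) = Copp (CZ a).
Proof. cexpand; rewrite opp_IZR; apply CC_eq; ring. Qed.

Lemma Cnat_add a b : Cnat (a + b) = Cadd (Cnat a) (Cnat b).
Proof. cexpand; rewrite plus_INR; apply CC_eq; ring. Qed.

Lemma Cpow_add z a b : Cpow z (a + b) = Cmul (Cpow z a) (Cpow z b).
Proof. induction a as [|a IH]; simpl; [ring | rewrite IH; ring]. Qed.

Lemma Cexp_add x y : Cexp (Cadd x y) = Cmul (Cexp x) (Cexp y).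
Proof.
  csplit; unfold Cexp; cexpand; rewrite exp_plus, cos_plus, sin_plus; apply CC_eq; ring.
Qed.

Lemma ee_add x y : ee (Cadd x y) = Cmul (ee x) (ee y).
Proof. unfold ee; rewrite <- Cexp_add; f_equal; ring. Qed.

Lemma ee_form a b :
  ee (a, b) = (exp (-(2*PI*b)) * cos (2*PI*a), exp (-(2*PI*b)) * sin (2*PI*a)).
Proof. unfold ee, Cexp; cexpand; apply CC_eq; do 2 f_equal; ring. Qed.

Lemma ee_real x : ee (RtoC x) = (cos (2*PI*x), sin (2*PI*x)).
Proof.
  unfold RtoC; rewrite ee_form; replace (-(2*PI*0)) with 0 by ring.
  rewrite exp_0; apply CC_eq; ring.
Qed.

Lemma ee_0 : ee C0 = C1.
Proof.
  change C0 with (RtoC 0); rewrite ee_real, Rmult_0_r, cos_0, sin_0; reflexivity.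
Qed.

Lemma ee_neq0 x : ee x <> C0.
Proof.
  intro H. assert (E : Cmul (ee x) (ee (Copp x)) = C1).
  { rewrite <- ee_add, <- ee_0; f_equal; ring. }
  rewrite H in E; cexpand; injection E; lra.
Qed.

Lemma Nrm_mul z w : Nrm (Cmul z w) = Nrm z * Nrm w.
Proof. csplit; cexpand; ring. Qed.

Lemma Nrm_nonneg z : 0 <= Nrm z.
Proof. csplit; cexpand; nra. Qed.

Lemma Nrm_pos z : z <> C0 -> 0 < Nrm z.
Proof.
  csplit; cexpand; intros H.
  destruct (Req_dec r 0) as [->|Hr]; [destruct (Req_dec r0 0) as [->|Hr0]|].
  - contradiction.
  - pose proof (Rsqr_pos_lt r0 Hr0); unfold Rsqr in *; nra.
  - pose proof (Rsqr_pos_lt r Hr); unfold Rsqr in *; nra.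
Qed.

Lemma Cmul_neq0 z w : z <> C0 -> w <> C0 -> Cmul z w <> C0.
Proof.
  intros Hz Hw E. apply Nrm_pos in Hz; apply Nrm_pos in Hw.
  assert (N0 : Nrm (Cmul z w) = 0) by (rewrite E; cexpand; ring).
  rewrite Nrm_mul in N0; nra.
Qed.

Lemma Cinv_l z : z <> C0 -> Cmul (Cinv z) z = C1.
Proof.
  intro H; apply Nrm_pos in H; revert H; csplit; unfold Cinv; cexpand; intros.
  apply CC_eq; field; lra.
Qed.

Lemma Cinv_mul z w : z <> C0 -> w <> C0 -> Cinv (Cmul z w) = Cmul (Cinv z) (Cinv w).
Proof.
  intros Hz Hw.
  assert (Hzw : 0 < Nrm z * Nrm w) by (rewrite <- Nrm_mul; apply Nrm_pos, Cmul_neq0; auto).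
  apply Nrm_pos in Hz; apply Nrm_pos in Hw.
  pose proof (Nrm_mul z w) as E; revert Hz Hw Hzw E; csplit; unfold Cinv; cexpand; intros.
  rewrite E; apply CC_eq; field; split; lra.
Qed.

Lemma Cmul_eq0 x y : x <> C0 -> Cmul x y = C0 -> y = C0.
Proof.
  intros Hx E.
  replace y with (Cmul (Cmul (Cinv x) x) y) by (rewrite Cinv_l; auto; ring).
  replace (Cmul (Cmul (Cinv x) x) y) with (Cmul (Cinv x) (Cmul x y)) by ring.
  rewrite E; ring.
Qed.

Lemma Cpow_neq0 z k : z <> C0 -> Cpow z k <> C0.
Proof.
  intro H; induction k; simpl; [|apply Cmul_neq0; auto].
  cexpand; intro E; injection E; lra.
Qed.

Lemma automorphy_factor_neq0 a b c d t :
  isSL2 a b c d -> inH t -> Cadd (Cmul (CZ c) t) (CZ d) <> C0.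
Proof.
  unfold isSL2, inH; destruct t as [x y]; unfold Cim; simpl; intros HS Hy E.
  cexpand; injection E; intros E2 E1.
  assert (Hc : IZR c = 0) by nra. apply eq_IZR in Hc; subst c.
  assert (Hd : IZR d = 0) by lra. apply eq_IZR in Hd; subst d. lia.
Qed.

(** * The modulus [|z| = sqrt (N z)] *)

Lemma Cnorm_nonneg z : 0 <= Cnorm z.
Proof. apply sqrt_pos. Qed.

Lemma Cnorm_mul z w : Cnorm (Cmul z w) = Cnorm z * Cnorm w.
Proof. unfold Cnorm; rewrite Nrm_mul; apply sqrt_mult; apply Nrm_nonneg. Qed.

Lemma Cnorm_C0 : Cnorm C0 = 0.
Proof. unfold Cnorm; cexpand; rewrite Rmult_0_l, Rplus_0_l; apply sqrt_0. Qed.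

Lemma Cnorm_pos z : z <> C0 -> 0 < Cnorm z.
Proof. intro H; apply sqrt_lt_R0, Nrm_pos, H. Qed.

Lemma Cnorm_pos_neq h : 0 < Cnorm h -> h <> C0.
Proof. intros H ->; rewrite Cnorm_C0 in H; lra. Qed.

Lemma Cnorm_RtoC x : Cnorm (RtoC x) = Rabs x.
Proof.
  unfold Cnorm; cexpand; rewrite Rmult_0_l, Rplus_0_r, <- Rsqr_def; apply sqrt_Rsqr_abs.
Qed.

Lemma Cnorm_Cnat N : Cnorm (Cnat N) = INR N.
Proof. unfold Cnat; rewrite Cnorm_RtoC; apply Rabs_right, Rle_ge, pos_INR. Qed.

(** Triangle inequality, via Cauchy--Schwarz for the real inner product. *)
Lemma Cnorm_add z w : Cnorm (Cadd z w) <= Cnorm z + Cnorm w.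
Proof.
  unfold Cnorm.
  pose proof (sqrt_pos (Nrm z)); pose proof (sqrt_pos (Nrm w)).
  rewrite <- (sqrt_square (sqrt (Nrm z) + sqrt (Nrm w))) by lra.
  apply sqrt_le_1_alt.
  replace ((sqrt (Nrm z) + sqrt (Nrm w)) * (sqrt (Nrm z) + sqrt (Nrm w)))
    with (Nrm z + Nrm w + 2 * sqrt (Nrm z * Nrm w))
    by (rewrite sqrt_mult by apply Nrm_nonneg;
        rewrite <- (sqrt_sqrt (Nrm z)) at 1 by apply Nrm_nonneg;
        rewrite <- (sqrt_sqrt (Nrm w)) at 1 by apply Nrm_nonneg; ring).
  assert (CS : Cre z * Cre w + Cim z * Cim w <= sqrt (Nrm z * Nrm w)).
  { destruct (Rle_dec (Cre z * Cre w + Cim z * Cim w) 0).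
    - pose proof (sqrt_pos (Nrm z * Nrm w)); lra.
    - rewrite <- (sqrt_square (Cre z * Cre w + Cim z * Cim w)) by lra.
      apply sqrt_le_1_alt; destruct z as [a b], w as [c d]; cexpand.
      pose proof (Rle_0_sqr (a*d - b*c)); unfold Rsqr in *; nra. }
  destruct z, w; cexpand; nra.
Qed.

Lemma Cnorm_opp z : Cnorm (Copp z) = Cnorm z.
Proof. unfold Cnorm; f_equal; csplit; cexpand; ring. Qed.

Lemma Cnorm_sub_le a b : Cnorm a <= Cnorm b + Cnorm (Csub a b).
Proof. replace a with (Cadd b (Csub a b)) at 1 by ring; apply Cnorm_add. Qed.

Lemma Cnorm_re z : Rabs (Cre z) <= Cnorm z.
Proof.
  unfold Cnorm, Nrm; rewrite <- sqrt_Rsqr_abs; apply sqrt_le_1_alt.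
  pose proof (Rle_0_sqr (Cim z)); unfold Rsqr in *; lra.
Qed.

Lemma Cnorm_im z : Rabs (Cim z) <= Cnorm z.
Proof.
  unfold Cnorm, Nrm; rewrite <- sqrt_Rsqr_abs; apply sqrt_le_1_alt.
  pose proof (Rle_0_sqr (Cre z)); unfold Rsqr in *; lra.
Qed.

Lemma Cnorm_le_reim z : Cnorm z <= Rabs (Cre z) + Rabs (Cim z).
Proof.
  pose proof (Rabs_pos (Cre z)); pose proof (Rabs_pos (Cim z)).
  unfold Cnorm; rewrite <- (sqrt_square (Rabs (Cre z) + Rabs (Cim z))) by lra.
  apply sqrt_le_1_alt; unfold Nrm.
  pose proof (Rsqr_abs (Cre z)); pose proof (Rsqr_abs (Cim z)); unfold Rsqr in *; nra.
Qed.

Lemma Cmul_close x x' y y' eta : eta <= 1 ->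
  Cnorm (Csub x' x) < eta -> Cnorm (Csub y' y) < eta ->
  Cnorm (Csub (Cmul x' y') (Cmul x y)) <= eta * (Cnorm x + Cnorm y + 1).
Proof.
  intros Heta Hx Hy.
  replace (Csub (Cmul x' y') (Cmul x y))
    with (Cadd (Cmul (Csub x' x) y') (Cmul x (Csub y' y))) by ring.
  eapply Rle_trans; [apply Cnorm_add|]; rewrite !Cnorm_mul.
  pose proof (Cnorm_sub_le y' y); pose proof (Cnorm_nonneg (Csub x' x)).
  pose proof (Cnorm_nonneg x); pose proof (Cnorm_nonneg y); pose proof (Cnorm_nonneg y').
  assert (Cnorm (Csub x' x) * Cnorm y' <= eta * (Cnorm y + 1))
    by (apply Rmult_le_compat; lra).
  assert (Cnorm x * Cnorm (Csub y' y) <= Cnorm x * eta)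
    by (apply Rmult_le_compat_l; lra).
  nra.
Qed.

Definition mul_tol (eps X Y : R) : R := Rmin 1 (eps / (2 * (X + Y + 1))).

Lemma mul_tol_pos eps X Y : 0 < eps -> 0 <= X -> 0 <= Y -> 0 < mul_tol eps X Y.
Proof. intros; apply Rmin_pos; [lra | apply Rdiv_lt_0_compat; lra]. Qed.

Lemma Cmul_close_eps x x' y y' eps : 0 < eps ->
  Cnorm (Csub x' x) < mul_tol eps (Cnorm x) (Cnorm y) ->
  Cnorm (Csub y' y) < mul_tol eps (Cnorm x) (Cnorm y) ->
  Cnorm (Csub (Cmul x' y') (Cmul x y)) < eps.
Proof.
  intros He Hx Hy. pose proof (Cnorm_nonneg x); pose proof (Cnorm_nonneg y).
  eapply Rle_lt_trans; [apply Cmul_close; [apply Rmin_l | exact Hx | exact Hy]|].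
  apply Rle_lt_trans with (eps / (2 * (Cnorm x + Cnorm y + 1)) * (Cnorm x + Cnorm y + 1)).
  - apply Rmult_le_compat_r; [lra | apply Rmin_r].
  - replace (eps / (2 * (Cnorm x + Cnorm y + 1)) * (Cnorm x + Cnorm y + 1)) with (eps / 2)
      by (field; lra). lra.
Qed.

(** * Finite sums over lists *)

Definition Rsuml {I : Type} (f : I -> R) (l : list I) : R :=
  fold_right (fun x acc => f x + acc) 0 l.

Lemma Csum_app {I} (f : I -> CC) l1 l2 :
  Csum (map f (l1 ++ l2)) = Cadd (Csum (map f l1)) (Csum (map f l2)).
Proof. induction l1 as [|x l IH]; simpl; [|rewrite IH]; ring. Qed.

Lemma Csum_ext {I} (f g : I -> CC) l :
  (forall x, In x l -> f x = g x) -> Csum (map f l) = Csum (map g l).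
Proof. induction l as [|x l IH]; simpl; intros H; auto; rewrite H, IH; auto. Qed.

Lemma Csum_scale {I} (f : I -> CC) k l :
  Csum (map (fun x => Cmul k (f x)) l) = Cmul k (Csum (map f l)).
Proof. induction l as [|x l IH]; simpl; [|rewrite IH]; ring. Qed.

Lemma Csum_scale_r {I} (f : I -> CC) k l :
  Csum (map (fun x => Cmul (f x) k) l) = Cmul (Csum (map f l)) k.
Proof. induction l as [|x l IH]; simpl; [|rewrite IH]; ring. Qed.

Lemma Csum_addf {I} (f g : I -> CC) l :
  Csum (map (fun x => Cadd (f x) (g x)) l) = Cadd (Csum (map f l)) (Csum (map g l)).
Proof. induction l as [|x l IH]; simpl; [|rewrite IH]; ring. Qed.

Lemma Csum_zero {I} (f : I -> CC) l : (forall x, In x l -> f x = C0) -> Csum (map f l) = C0.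
Proof.
  induction l as [|x l IH]; simpl; intro H; [reflexivity|].
  rewrite H, IH by auto; ring.
Qed.

Lemma Csum_perm {I} (f : I -> CC) l l' : Permutation l l' -> Csum (map f l) = Csum (map f l').
Proof. induction 1; simpl; try congruence; ring. Qed.

Lemma Csum_single {I} (f : I -> CC) l x : NoDup l -> In x l ->
  (forall y, In y l -> y <> x -> f y = C0) -> Csum (map f l) = f x.
Proof.
  induction l as [|a l IH]; simpl; intros ND Hin H; [contradiction|].
  inversion ND; subst; destruct Hin as [->|Hin].
  - rewrite Csum_zero; [ring|]. intros y Hy; apply H; auto; intros ->; contradiction.
  - rewrite H by (auto; intros ->; contradiction). rewrite IH; auto; ring.
Qed.

Lemma Csum_filter {I} (f : I -> CC) (P : I -> bool) l :
  Csum (map f l) = Cadd (Csum (map f (filter P l)))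
                        (Csum (map f (filter (fun x => negb (P x)) l))).
Proof. induction l as [|x l IH]; simpl; [ring|]; destruct (P x); simpl; rewrite IH; ring. Qed.

Lemma Csum_flat_map {D E} (a : D -> CC) (fib : E -> list D) G :
  Csum (map a (flat_map fib G)) = Csum (map (fun e => Csum (map a (fib e))) G).
Proof. induction G; simpl; [reflexivity | rewrite Csum_app, IHG; reflexivity]. Qed.

Lemma Csum_list_prod {A B} (f : A -> CC) (g : B -> CC) l1 l2 :
  Csum (map (fun p => Cmul (f (fst p)) (g (snd p))) (list_prod l1 l2))
  = Cmul (Csum (map f l1)) (Csum (map g l2)).
Proof.
  induction l1 as [|x l IH]; simpl; [ring|].
  rewrite Csum_app, IH, map_map; simpl; rewrite Csum_scale; ring.
Qed.

Lemma Cre_Csum {I} (f : I -> CC) l : Cre (Csum (map f l)) = Rsuml (fun x => Cre (f x)) l.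
Proof. induction l as [|x l IH]; simpl; [reflexivity | rewrite <- IH; reflexivity]. Qed.

Lemma Cim_Csum {I} (f : I -> CC) l : Cim (Csum (map f l)) = Rsuml (fun x => Cim (f x)) l.
Proof. induction l as [|x l IH]; simpl; [reflexivity | rewrite <- IH; reflexivity]. Qed.

Lemma Cnorm_Csum {I} (f : I -> CC) l : Cnorm (Csum (map f l)) <= Rsuml (fun x => Cnorm (f x)) l.
Proof.
  induction l; simpl; [rewrite Cnorm_C0; lra|].
  eapply Rle_trans; [apply Cnorm_add | lra].
Qed.

Lemma Rsuml_app {I} (f : I -> R) l1 l2 : Rsuml f (l1 ++ l2) = Rsuml f l1 + Rsuml f l2.
Proof. induction l1 as [|x l IH]; simpl; [|rewrite IH]; ring. Qed.

Lemma Rsuml_perm {I} (f : I -> R) l l' : Permutation l l' -> Rsuml f l = Rsuml f l'.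
Proof. induction 1; simpl; try congruence; ring. Qed.

Lemma Rsuml_filter {I} (f : I -> R) (P : I -> bool) l :
  Rsuml f l = Rsuml f (filter P l) + Rsuml f (filter (fun x => negb (P x)) l).
Proof. induction l as [|x l IH]; simpl; [ring|]; destruct (P x); simpl; rewrite IH; ring. Qed.

Lemma Rsuml_nonneg {I} (f : I -> R) l : (forall x, 0 <= f x) -> 0 <= Rsuml f l.
Proof. intros H; induction l as [|x l IH]; simpl; [lra | pose proof (H x); lra]. Qed.

Lemma Rsuml_mono {I} (f g : I -> R) l : (forall x, f x <= g x) -> Rsuml f l <= Rsuml g l.
Proof. intros H; induction l as [|x l IH]; simpl; [lra | pose proof (H x); lra]. Qed.

Lemma Rsuml_plus {I} (f g : I -> R) l : Rsuml (fun x => f x + g x) l = Rsuml f l + Rsuml g l.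
Proof. induction l as [|x l IH]; simpl; [|rewrite IH]; ring. Qed.

Lemma Rsuml_scale {I} (f : I -> R) k l : Rsuml (fun x => k * f x) l = k * Rsuml f l.
Proof. induction l as [|x l IH]; simpl; [|rewrite IH]; ring. Qed.

Lemma Rsuml_list_prod {A B} (f : A -> R) (g : B -> R) l1 l2 :
  Rsuml (fun p => f (fst p) * g (snd p)) (list_prod l1 l2) = Rsuml f l1 * Rsuml g l2.
Proof.
  induction l1 as [|x l IH]; simpl; [ring|]; rewrite Rsuml_app, IH.
  assert (Rsuml (fun p => f (fst p) * g (snd p)) (map (fun y => (x, y)) l2) = f x * Rsuml g l2)
    by (clear IH; induction l2 as [|y l2 IH2]; simpl; [|rewrite IH2]; ring).
  rewrite H; ring.
Qed.

Lemma Rsuml_incl {I} (f : I -> R) G H : NoDup G -> NoDup H -> incl G H ->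
  (forall x, 0 <= f x) -> Rsuml f G <= Rsuml f H.
Proof.
  revert H; induction G as [|x G IH]; simpl; intros H NG NH Hi Hf.
  - apply Rsuml_nonneg; auto.
  - inversion NG; subst.
    destruct (in_split x H (Hi x (or_introl eq_refl))) as [L1 [L2 ->]].
    rewrite (Rsuml_perm f (L1 ++ x :: L2) (x :: L1 ++ L2))
      by (symmetry; apply Permutation_middle).
    simpl; apply Rplus_le_compat_l, IH; auto.
    + apply NoDup_remove_1 in NH; auto.
    + intros y Hy. assert (HY : In y (L1 ++ x :: L2)) by (apply Hi; right; auto).
      apply in_app_or in HY; apply in_or_app.
      destruct HY as [|[|]]; auto; subst; contradiction.
Qed.

Definition posb (x : R) : bool := if Rle_dec 0 x then true else false.

Lemma Rsuml_abs {I} (f : I -> R) l :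
  Rsuml (fun x => Rabs (f x)) l
  = Rsuml f (filter (fun x => posb (f x)) l) - Rsuml f (filter (fun x => negb (posb (f x))) l).
Proof.
  induction l as [|x l IH]; simpl; [ring|].
  destruct (posb (f x)) eqn:E; simpl; rewrite IH; unfold posb in E;
    destruct (Rle_dec 0 (f x)); try discriminate.
  - rewrite Rabs_right by lra; ring.
  - rewrite Rabs_left by lra; ring.
Qed.

Definition inb {I} (dec : forall x y : I, {x = y} + {x <> y}) (l : list I) (x : I) : bool :=
  if in_dec dec x l then true else false.

Lemma inb_true {I} dec (l : list I) x : inb dec l x = true <-> In x l.
Proof. unfold inb; destruct (in_dec dec x l); split; intros; auto; discriminate || contradiction. Qed.

Lemma inb_false {I} dec (l : list I) x : negb (inb dec l x) = true <-> ~ In x l.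
Proof. unfold inb; destruct (in_dec dec x l); simpl; split; intros; auto; try discriminate; contradiction. Qed.

Lemma NoDup_list_prod {A B} (l1 : list A) (l2 : list B) :
  NoDup l1 -> NoDup l2 -> NoDup (list_prod l1 l2).
Proof.
  induction l1 as [|x l1 IH]; simpl; intros N1 N2; [constructor|].
  inversion N1; subst; apply NoDup_app; auto.
  - apply FinFun.Injective_map_NoDup; auto. intros y y' E; inversion E; auto.
  - intros p Hp Hp'. apply in_map_iff in Hp. destruct Hp as [y [<- _]].
    apply in_prod_iff in Hp'; tauto.
Qed.

Lemma NoDup_flat_map {D E} (fib : E -> list D) (pi : D -> E) G :
  NoDup G -> (forall e, NoDup (fib e)) -> (forall d e, In d (fib e) -> pi d = e) ->
  NoDup (flat_map fib G).
Proof.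
  induction G as [|e G IH]; simpl; intros NG Nf Hp; [constructor|].
  inversion NG; subst; apply NoDup_app; auto.
  intros d Hd Hd2. apply in_flat_map in Hd2. destruct Hd2 as [e' [He' Hd']].
  apply Hp in Hd; apply Hp in Hd'; subst; congruence.
Qed.

Definition prod_dec {I J} (decI : forall x y : I, {x = y} + {x <> y})
  (decJ : forall x y : J, {x = y} + {x <> y}) : forall p q : I * J, {p = q} + {p <> q}.
Proof.
  intros [a b] [c d]; destruct (decI a c), (decJ b d); subst; auto;
  right; intro E; inversion E; auto.
Defined.

(** * Unordered summation [has_usum]

    Over a type with
    decidable equality such families are absolutely summable (tails of [|a|] are
    small), which is what makes products and regroupings legitimate. *)

Lemma has_usum_ext {I} (a b : I -> CC) S : (forall x, a x = b x) -> has_usum a S -> has_usum b S.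
Proof.
  intros E H eps He; destruct (H eps He) as [F0 H0]; exists F0; intros F ND Hi.
  rewrite (Csum_ext b a) by (intros; symmetry; auto); auto.
Qed.

Lemma has_usum_add {I} (a b : I -> CC) S T :
  has_usum a S -> has_usum b T -> has_usum (fun x => Cadd (a x) (b x)) (Cadd S T).
Proof.
  intros Ha Hb eps He.
  destruct (Ha (eps/2) ltac:(lra)) as [F1 H1], (Hb (eps/2) ltac:(lra)) as [F2 H2].
  exists (F1 ++ F2); intros F ND Hi.
  specialize (H1 F ND (fun x h => Hi x (in_or_app _ _ _ (or_introl h)))).
  specialize (H2 F ND (fun x h => Hi x (in_or_app _ _ _ (or_intror h)))).
  rewrite Csum_addf.
  replace (Csub (Cadd (Csum (map a F)) (Csum (map b F))) (Cadd S T))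
    with (Cadd (Csub (Csum (map a F)) S) (Csub (Csum (map b F)) T)) by ring.
  eapply Rle_lt_trans; [apply Cnorm_add | lra].
Qed.

Lemma has_usum_scale {I} (a : I -> CC) S k :
  has_usum a S -> has_usum (fun x => Cmul k (a x)) (Cmul k S).
Proof.
  intros Ha eps He. pose proof (Cnorm_nonneg k) as Hk.
  destruct (Ha (eps / (Cnorm k + 1)) ltac:(apply Rdiv_lt_0_compat; lra)) as [F0 H0].
  exists F0; intros F ND Hi; specialize (H0 F ND Hi); rewrite Csum_scale.
  replace (Csub (Cmul k (Csum (map a F))) (Cmul k S))
    with (Cmul k (Csub (Csum (map a F)) S)) by ring.
  rewrite Cnorm_mul. pose proof (Cnorm_nonneg (Csub (Csum (map a F)) S)).
  apply Rle_lt_trans with (Cnorm k * (eps / (Cnorm k + 1))).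
  - apply Rmult_le_compat_l; lra.
  - replace (Cnorm k * (eps / (Cnorm k + 1))) with (eps - eps / (Cnorm k + 1)) by (field; lra).
    pose proof (Rdiv_lt_0_compat eps (Cnorm k + 1) He ltac:(lra)); lra.
Qed.

Lemma has_usum_finsum {I J} (L : list J) (f : J -> I -> CC) (S : J -> CC) :
  (forall j, In j L -> has_usum (f j) (S j)) ->
  has_usum (fun p => Csum (map (fun j => f j p) L)) (Csum (map S L)).
Proof.
  induction L as [|j L IH]; simpl; intros H.
  - intros eps He; exists nil; intros F _ _.
    rewrite Csum_zero by auto. replace (Csub C0 C0) with C0 by ring; rewrite Cnorm_C0; lra.
  - apply has_usum_add; auto.
Qed.

Lemma has_usum_cauchy {I} (dec : forall x y : I, {x = y} + {x <> y}) (a : I -> CC) S eps F0 :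
  (forall F, NoDup F -> incl F0 F -> Cnorm (Csub (Csum (map a F)) S) < eps) ->
  forall G, NoDup G -> (forall x, In x G -> ~ In x F0) -> Cnorm (Csum (map a G)) < 2 * eps.
Proof.
  intros H0 G NG Hd. set (F0' := nodup dec F0).
  assert (H1 : Cnorm (Csub (Csum (map a F0')) S) < eps).
  { apply H0; [apply NoDup_nodup | intros x Hx; apply nodup_In; auto]. }
  assert (H2 : Cnorm (Csub (Csum (map a (F0' ++ G))) S) < eps).
  { apply H0.
    - apply NoDup_app; auto; [apply NoDup_nodup|].
      intros x Hx Hx'; apply (Hd x Hx'); apply nodup_In in Hx; auto.
    - intros x Hx; apply in_or_app; left; apply nodup_In; auto. }
  rewrite Csum_app in H2.
  replace (Csum (map a G))
    with (Cadd (Csub (Cadd (Csum (map a F0')) (Csum (map a G))) S)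
               (Copp (Csub (Csum (map a F0')) S))) by ring.
  eapply Rle_lt_trans; [apply Cnorm_add|]; rewrite Cnorm_opp; lra.
Qed.

Lemma has_usum_tail {I} (dec : forall x y : I, {x = y} + {x <> y}) (a : I -> CC) S :
  has_usum a S -> forall eps, 0 < eps -> exists F0, forall G, NoDup G ->
    (forall x, In x G -> ~ In x F0) -> Rsuml (fun x => Cnorm (a x)) G < eps.
Proof.
  intros Ha eps He. destruct (Ha (eps/8) ltac:(lra)) as [F0 H0].
  exists F0; intros G NG Hd.
  (* every sub-sum over [G] is smaller than [eps/4] ... *)
  assert (Hsub : forall P : I -> bool, Cnorm (Csum (map a (filter P G))) < eps / 4).
  { intro P. replace (eps / 4) with (2 * (eps / 8)) by field.
    apply (has_usum_cauchy dec a S (eps/8) F0 H0); [apply NoDup_filter; auto|].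
    intros x Hx; apply filter_In in Hx; apply Hd; tauto. }
  (* ... and [sum |a|] is bounded by four such sub-sums (signs of real and imaginary parts) *)
  eapply Rle_lt_trans.
  { apply Rsuml_mono with (g := fun x => Rabs (Cre (a x)) + Rabs (Cim (a x))).
    intro; apply Cnorm_le_reim. }
  rewrite Rsuml_plus, !(Rsuml_abs (fun x => _)), <- !(Cre_Csum a), <- !(Cim_Csum a).
  assert (Hre : forall P, Rabs (Cre (Csum (map a (filter P G)))) < eps / 4)
    by (intro P; eapply Rle_lt_trans; [apply Cnorm_re | apply Hsub]).
  assert (Him : forall P, Rabs (Cim (Csum (map a (filter P G)))) < eps / 4)
    by (intro P; eapply Rle_lt_trans; [apply Cnorm_im | apply Hsub]).
  pose proof (Hre (fun x => posb (Cre (a x)))); pose proof (Hre (fun x => negb (posb (Cre (a x))))).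
  pose proof (Him (fun x => posb (Cim (a x)))); pose proof (Him (fun x => negb (posb (Cim (a x))))).
  repeat match goal with H : Rabs _ < _ |- _ => apply Rabs_def2 in H; destruct H end.
  lra.
Qed.

Lemma has_usum_bound {I} (dec : forall x y : I, {x = y} + {x <> y}) (a : I -> CC) S :
  has_usum a S -> exists M, 0 <= M /\ forall G, NoDup G -> Rsuml (fun x => Cnorm (a x)) G <= M.
Proof.
  intros Ha. destruct (has_usum_tail dec a S Ha 1 ltac:(lra)) as [F0 H0].
  exists (Rsuml (fun x => Cnorm (a x)) (nodup dec F0) + 1); split.
  { pose proof (Rsuml_nonneg (fun x => Cnorm (a x)) (nodup dec F0) (fun x => Cnorm_nonneg _)); lra. }
  intros G NG; rewrite (Rsuml_filter _ (inb dec F0) G).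
  assert (Rsuml (fun x => Cnorm (a x)) (filter (inb dec F0) G)
          <= Rsuml (fun x => Cnorm (a x)) (nodup dec F0)).
  { apply Rsuml_incl; [apply NoDup_filter; auto | apply NoDup_nodup | | intro; apply Cnorm_nonneg].
    intros x Hx; apply filter_In in Hx; apply nodup_In, (inb_true dec); tauto. }
  assert (Rsuml (fun x => Cnorm (a x)) (filter (fun x => negb (inb dec F0 x)) G) < 1).
  { apply H0; [apply NoDup_filter; auto|].
    intros x Hx; apply filter_In in Hx; apply (inb_false dec); tauto. }
  lra.
Qed.

Lemma has_usum_control {I} (dec : forall x y : I, {x = y} + {x <> y}) (a : I -> CC) S :
  has_usum a S -> forall eta, 0 < eta -> exists A0, NoDup A0
    /\ Cnorm (Csub (Csum (map a A0)) S) < eta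
    /\ forall G, NoDup G -> (forall x, In x G -> ~ In x A0) -> Rsuml (fun x => Cnorm (a x)) G < eta.
Proof.
  intros Ha eta He.
  destruct (Ha eta He) as [A1 H1], (has_usum_tail dec a S Ha eta He) as [A2 H2].
  exists (nodup dec (A1 ++ A2)); split; [apply NoDup_nodup|split].
  - apply H1; [apply NoDup_nodup|]. intros x Hx; apply nodup_In, in_or_app; auto.
  - intros G NG Hd; apply H2; auto.
    intros x Hx Hx2; apply (Hd x Hx), nodup_In, in_or_app; auto.
Qed.

Lemma Rsuml_prod_projections {I J} (decI : forall x y : I, {x = y} + {x <> y})
  (decJ : forall x y : J, {x = y} + {x <> y}) (f : I -> R) (g : J -> R) (P : list (I * J)) :
  NoDup P -> (forall x, 0 <= f x) -> (forall y, 0 <= g y) ->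
  Rsuml (fun p => f (fst p) * g (snd p)) P
  <= Rsuml f (nodup decI (map fst P)) * Rsuml g (nodup decJ (map snd P)).
Proof.
  intros NP Hf Hg; rewrite <- Rsuml_list_prod.
  apply Rsuml_incl; auto; [apply NoDup_list_prod; apply NoDup_nodup| |].
  - intros [x y] Hp; apply in_prod_iff; split; apply nodup_In, in_map_iff; exists (x, y); auto.
  - intros [x y]; simpl; apply Rmult_le_pos; auto.
Qed.

Lemma off_rectangle_bound {I J} (decI : forall x y : I, {x = y} + {x <> y})
  (decJ : forall x y : J, {x = y} + {x <> y}) (f : I -> R) (g : J -> R)
  (A0 : list I) (B0 : list J) (eta MA MB : R) (P : list (I * J)) :
  (forall x, 0 <= f x) -> (forall y, 0 <= g y) ->
  (forall G, NoDup G -> (forall x, In x G -> ~ In x A0) -> Rsuml f G < eta) ->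
  (forall G, NoDup G -> (forall y, In y G -> ~ In y B0) -> Rsuml g G < eta) ->
  (forall G, NoDup G -> Rsuml f G <= MA) -> (forall G, NoDup G -> Rsuml g G <= MB) ->
  NoDup P -> (forall p, In p P -> ~ (In (fst p) A0 /\ In (snd p) B0)) ->
  Rsuml (fun p => f (fst p) * g (snd p)) P <= eta * (MA + MB).
Proof.
  intros Hf Hg TA TB BA BB NP HP.
  rewrite (Rsuml_filter _ (fun p => inb decI A0 (fst p)) P).
  set (P2 := filter (fun p => inb decI A0 (fst p)) P).
  set (P1 := filter (fun p => negb (inb decI A0 (fst p))) P).
  assert (N1 : NoDup P1) by (apply NoDup_filter; auto).
  assert (N2 : NoDup P2) by (apply NoDup_filter; auto).
  assert (S1 : Rsuml f (nodup decI (map fst P1)) < eta).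
  { apply TA; [apply NoDup_nodup|]. intros x Hx Hx2.
    apply nodup_In, in_map_iff in Hx; destruct Hx as [p [<- Hp]].
    apply filter_In in Hp; destruct Hp as [_ Hp]; apply (inb_false decI) in Hp; auto. }
  assert (S2 : Rsuml g (nodup decJ (map snd P2)) < eta).
  { apply TB; [apply NoDup_nodup|]. intros y Hy Hy2.
    apply nodup_In, in_map_iff in Hy; destruct Hy as [p [<- Hp]].
    apply filter_In in Hp; destruct Hp as [Hp Hq]; apply (inb_true decI) in Hq.
    apply (HP p Hp); auto. }
  pose proof (Rsuml_prod_projections decI decJ f g P1 N1 Hf Hg).
  pose proof (Rsuml_prod_projections decI decJ f g P2 N2 Hf Hg).
  pose proof (BB _ (NoDup_nodup decJ (map snd P1))).
  pose proof (BA _ (NoDup_nodup decI (map fst P2))).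
  pose proof (Rsuml_nonneg f (nodup decI (map fst P1)) Hf).
  pose proof (Rsuml_nonneg g (nodup decJ (map snd P1)) Hg).
  pose proof (Rsuml_nonneg f (nodup decI (map fst P2)) Hf).
  pose proof (Rsuml_nonneg g (nodup decJ (map snd P2)) Hg).
  assert (Rsuml f (nodup decI (map fst P1)) * Rsuml g (nodup decJ (map snd P1)) <= eta * MB)
    by (apply Rmult_le_compat; lra).
  assert (Rsuml f (nodup decI (map fst P2)) * Rsuml g (nodup decJ (map snd P2)) <= MA * eta)
    by (apply Rmult_le_compat; lra).
  nra.
Qed.

Lemma has_usum_prod {I J} (decI : forall x y : I, {x = y} + {x <> y})
  (decJ : forall x y : J, {x = y} + {x <> y}) (a : I -> CC) (b : J -> CC) SA SB :
  has_usum a SA -> has_usum b SB ->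
  has_usum (fun p : I * J => Cmul (a (fst p)) (b (snd p))) (Cmul SA SB).
Proof.
  intros Ha Hb eps He.
  destruct (has_usum_bound decI a SA Ha) as [MA [HMA BA]].
  destruct (has_usum_bound decJ b SB Hb) as [MB [HMB BB]].
  set (eta := Rmin (mul_tol (eps/2) (Cnorm SA) (Cnorm SB)) (eps / (2 * (MA + MB + 1)))).
  assert (Heta : 0 < eta).
  { apply Rmin_pos; [apply mul_tol_pos; try apply Cnorm_nonneg; lra|apply Rdiv_lt_0_compat; lra]. }
  destruct (has_usum_control decI a SA Ha eta Heta) as [A0 [NA [HA TA]]].
  destruct (has_usum_control decJ b SB Hb eta Heta) as [B0 [NB [HB TB]]].
  exists (list_prod A0 B0); intros F NF Hi.
  set (inR := inb (prod_dec decI decJ) (list_prod A0 B0)).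
  rewrite (Csum_filter _ inR F).
  (* the pairs of [F] inside the rectangle give the product of the partial sums *)
  assert (Hrect : Permutation (filter inR F) (list_prod A0 B0)).
  { apply NoDup_Permutation; [apply NoDup_filter; auto | apply NoDup_list_prod; auto|].
    intro p; unfold inR; rewrite filter_In, inb_true; split; [tauto | intro; split; auto]. }
  rewrite (Csum_perm _ _ _ Hrect), Csum_list_prod.
  assert (Hin : Cnorm (Csub (Cmul (Csum (map a A0)) (Csum (map b B0))) (Cmul SA SB)) < eps / 2).
  { apply Cmul_close_eps; [lra | |]; eapply Rlt_le_trans; eauto; apply Rmin_l. }
  (* the pairs outside the rectangle contribute less than [eps/2] *)
  set (Out := filter (fun x => negb (inR x)) F).
  assert (Hout : Cnorm (Csum (map (fun p : I * J => Cmul (a (fst p)) (b (snd p))) Out)) < eps / 2).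
  { eapply Rle_lt_trans; [apply Cnorm_Csum|].
    eapply Rle_lt_trans.
    { apply Rsuml_mono with (g := fun p => Cnorm (a (fst p)) * Cnorm (b (snd p))).
      intro; rewrite Cnorm_mul; lra. }
    eapply Rle_lt_trans.
    { apply (off_rectangle_bound decI decJ (fun x => Cnorm (a x)) (fun y => Cnorm (b y)) A0 B0 eta MA MB);
        auto; try (intro; apply Cnorm_nonneg); [apply NoDup_filter; auto|].
      intros [x y] Hp Hc; unfold Out in Hp; apply filter_In in Hp; destruct Hp as [_ Hp].
      apply (inb_false (prod_dec decI decJ)) in Hp; apply Hp, in_prod_iff; auto. }
    apply Rle_lt_trans with (eps / (2 * (MA + MB + 1)) * (MA + MB)).
    - apply Rmult_le_compat_r; [lra | apply Rmin_r].
    - apply Rlt_le_trans with (eps / (2 * (MA + MB + 1)) * (MA + MB + 1)).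
      + apply Rmult_lt_compat_l; [apply Rdiv_lt_0_compat|]; lra.
      + right; field; lra. }
  replace (Csub (Cadd (Cmul (Csum (map a A0)) (Csum (map b B0)))
                      (Csum (map (fun p : I * J => Cmul (a (fst p)) (b (snd p))) Out))) (Cmul SA SB))
    with (Cadd (Csub (Cmul (Csum (map a A0)) (Csum (map b B0))) (Cmul SA SB))
               (Csum (map (fun p : I * J => Cmul (a (fst p)) (b (snd p))) Out))) by ring.
  eapply Rle_lt_trans; [apply Cnorm_add | lra].
Qed.

Lemma has_usum_fiber {D E} (a : D -> CC) S (pi : D -> E) (fib : E -> list D) :
  (forall e, NoDup (fib e)) -> (forall d e, In d (fib e) <-> pi d = e) ->
  has_usum a S -> has_usum (fun e => Csum (map a (fib e))) S.
Proof.
  intros Nf Hf Ha eps He. destruct (Ha eps He) as [F0 H0].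
  exists (map pi F0); intros G ND Hi.
  rewrite <- Csum_flat_map; apply H0.
  - apply NoDup_flat_map with pi; auto; intros d e; apply Hf.
  - intros d Hd; apply in_flat_map; exists (pi d); split; [apply Hi, in_map; auto | apply Hf; auto].
Qed.

(** * Holomorphy on [H x C^2] *)

Definition cont3at (f : CC -> CC -> CC -> CC) (t z1 z2 : CC) : Prop :=
  forall eps, 0 < eps -> exists delta, 0 < delta /\
    forall t' z1' z2', Cnorm (Csub t' t) < delta -> Cnorm (Csub z1' z1) < delta ->
      Cnorm (Csub z2' z2) < delta -> Cnorm (Csub (f t' z1' z2') (f t z1 z2)) < eps.

Lemma cont3_const c t z1 z2 : cont3at (fun _ _ _ => c) t z1 z2.
Proof.
  intros eps He; exists 1; split; [lra|]; intros.
  replace (Csub c c) with C0 by ring; rewrite Cnorm_C0; lra.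
Qed.

Lemma cont3_add f g t z1 z2 : cont3at f t z1 z2 -> cont3at g t z1 z2 ->
  cont3at (fun a b c => Cadd (f a b c) (g a b c)) t z1 z2.
Proof.
  intros Hf Hg eps He.
  destruct (Hf (eps/2) ltac:(lra)) as [d1 [Hd1 H1]], (Hg (eps/2) ltac:(lra)) as [d2 [Hd2 H2]].
  exists (Rmin d1 d2); split; [apply Rmin_pos; auto|]; intros t' a b Ht Ha Hb.
  pose proof (Rmin_l d1 d2); pose proof (Rmin_r d1 d2).
  specialize (H1 t' a b ltac:(lra) ltac:(lra) ltac:(lra)).
  specialize (H2 t' a b ltac:(lra) ltac:(lra) ltac:(lra)).
  replace (Csub (Cadd (f t' a b) (g t' a b)) (Cadd (f t z1 z2) (g t z1 z2)))
    with (Cadd (Csub (f t' a b) (f t z1 z2)) (Csub (g t' a b) (g t z1 z2))) by ring.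
  eapply Rle_lt_trans; [apply Cnorm_add | lra].
Qed.

Lemma cont3_mul f g t z1 z2 : cont3at f t z1 z2 -> cont3at g t z1 z2 ->
  cont3at (fun a b c => Cmul (f a b c) (g a b c)) t z1 z2.
Proof.
  intros Hf Hg eps He.
  set (eta := mul_tol eps (Cnorm (f t z1 z2)) (Cnorm (g t z1 z2))).
  assert (Heta : 0 < eta) by (apply mul_tol_pos; auto; apply Cnorm_nonneg).
  destruct (Hf eta Heta) as [d1 [Hd1 H1]], (Hg eta Heta) as [d2 [Hd2 H2]].
  exists (Rmin d1 d2); split; [apply Rmin_pos; auto|]; intros t' a b Ht Ha Hb.
  pose proof (Rmin_l d1 d2); pose proof (Rmin_r d1 d2).
  apply Cmul_close_eps; auto; [apply H1 | apply H2]; lra.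
Qed.

Lemma cont3_lin_comp (phi : CC -> CC -> CC) al be t z1 z2 : holo2 phi -> inH t ->
  cont3at (fun a b c => phi a (Cadd (Cmul al b) (Cmul be c))) t z1 z2.
Proof.
  intros [Hc _] Ht eps He.
  destruct (Hc t (Cadd (Cmul al z1) (Cmul be z2)) Ht eps He) as [d [Hd H]].
  set (K := Cnorm al + Cnorm be + 1).
  pose proof (Cnorm_nonneg al); pose proof (Cnorm_nonneg be).
  assert (HK : 1 <= K) by (unfold K; lra).
  assert (HdK : 0 < d / K) by (apply Rdiv_lt_0_compat; lra).
  exists (d / K); split; auto; intros t' a b Ht' Ha Hb.
  assert (d / K <= d) by (apply Rmult_le_reg_r with K; [lra|]; field_simplify; nra).
  apply H; [lra|].
  replace (Csub (Cadd (Cmul al a) (Cmul be b)) (Cadd (Cmul al z1) (Cmul be z2)))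
    with (Cadd (Cmul al (Csub a z1)) (Cmul be (Csub b z2))) by ring.
  eapply Rle_lt_trans; [apply Cnorm_add|]; rewrite !Cnorm_mul.
  pose proof (Cnorm_nonneg (Csub a z1)); pose proof (Cnorm_nonneg (Csub b z2)).
  assert (Cnorm al * Cnorm (Csub a z1) <= Cnorm al * (d / K)) by (apply Rmult_le_compat_l; lra).
  assert (Cnorm be * Cnorm (Csub b z2) <= Cnorm be * (d / K)) by (apply Rmult_le_compat_l; lra).
  assert ((Cnorm al + Cnorm be) * (d / K) < d).
  { replace (Cnorm al + Cnorm be) with (K - 1) by (unfold K; ring).
    replace ((K - 1) * (d / K)) with (d - d / K) by (field; lra); lra. }
  lra.
Qed.

Lemma Cdiff_ext g g' a : (forall x, g x = g' x) -> Cdiff_at g a -> Cdiff_at g' a.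
Proof. intros E H; replace g' with g by (apply functional_extensionality; auto); auto. Qed.

Lemma Cdiff_const c a : Cdiff_at (fun _ => c) a.
Proof.
  exists C0; intros eps He; exists 1; split; [lra|]; intros h Hh.
  replace (Csub (Cdiv (Csub c c) h) C0) with C0 by (unfold Cdiv; ring); rewrite Cnorm_C0; lra.
Qed.

Lemma Cdiff_add f g a : Cdiff_at f a -> Cdiff_at g a -> Cdiff_at (fun x => Cadd (f x) (g x)) a.
Proof.
  intros [lf Hf] [lg Hg]; exists (Cadd lf lg); intros eps He.
  destruct (Hf (eps/2) ltac:(lra)) as [d1 [Hd1 H1]], (Hg (eps/2) ltac:(lra)) as [d2 [Hd2 H2]].
  exists (Rmin d1 d2); split; [apply Rmin_pos; auto|]; intros h Hh.
  pose proof (Rmin_l d1 d2); pose proof (Rmin_r d1 d2).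
  specialize (H1 h ltac:(lra)); specialize (H2 h ltac:(lra)).
  replace (Csub (Cdiv (Csub (Cadd (f (Cadd a h)) (g (Cadd a h))) (Cadd (f a) (g a))) h) (Cadd lf lg))
    with (Cadd (Csub (Cdiv (Csub (f (Cadd a h)) (f a)) h) lf)
               (Csub (Cdiv (Csub (g (Cadd a h)) (g a)) h) lg)) by (unfold Cdiv; ring).
  eapply Rle_lt_trans; [apply Cnorm_add | lra].
Qed.

Lemma Cdiff_cont g a : Cdiff_at g a -> forall eta, 0 < eta -> exists delta, 0 < delta /\
  forall h, 0 < Cnorm h < delta -> Cnorm (Csub (g (Cadd a h)) (g a)) < eta.
Proof.
  intros [l Hg] eta He. destruct (Hg 1 ltac:(lra)) as [d [Hd H]].
  pose proof (Cnorm_nonneg l).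
  exists (Rmin d (eta / (Cnorm l + 1))); split.
  { apply Rmin_pos; [lra | apply Rdiv_lt_0_compat; lra]. }
  intros h Hh. pose proof (Rmin_l d (eta / (Cnorm l + 1))); pose proof (Rmin_r d (eta / (Cnorm l + 1))).
  specialize (H h ltac:(lra)).
  assert (Hneq : h <> C0) by (apply Cnorm_pos_neq; lra).
  set (Q := Cdiv (Csub (g (Cadd a h)) (g a)) h) in *.
  replace (Csub (g (Cadd a h)) (g a)) with (Cmul Q h)
    by (unfold Q, Cdiv; transitivity (Cmul (Csub (g (Cadd a h)) (g a)) (Cmul (Cinv h) h));
        [ring | rewrite Cinv_l by auto; ring]).
  rewrite Cnorm_mul. pose proof (Cnorm_sub_le Q l).
  apply Rle_lt_trans with ((Cnorm l + 1) * Cnorm h).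
  - apply Rmult_le_compat_r; [apply Cnorm_nonneg | lra].
  - apply Rlt_le_trans with ((Cnorm l + 1) * (eta / (Cnorm l + 1))); [apply Rmult_lt_compat_l; lra|].
    right; field; lra.
Qed.

(** Product rule: [(f g)' = f' g + f g'].  The difference quotient of [f g] is
    [Qf(h) g(a+h) + f(a) Qg(h)], and both terms converge. *)
Lemma Cdiff_mul f g a : Cdiff_at f a -> Cdiff_at g a -> Cdiff_at (fun x => Cmul (f x) (g x)) a.
Proof.
  intros Df Dg. pose proof (Cdiff_cont g a Dg) as Cg.
  destruct Df as [lf Hf], Dg as [lg Hg].
  exists (Cadd (Cmul lf (g a)) (Cmul (f a) lg)); intros eps He.
  set (eta := mul_tol (eps/2) (Cnorm lf) (Cnorm (g a))).
  assert (Heta : 0 < eta) by (apply mul_tol_pos; try apply Cnorm_nonneg; lra).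
  pose proof (Cnorm_nonneg (f a)) as Hfa.
  destruct (Hf eta Heta) as [d1 [Hd1 H1]], (Cg eta Heta) as [d2 [Hd2 H2]].
  destruct (Hg (eps / (2 * (Cnorm (f a) + 1))) ltac:(apply Rdiv_lt_0_compat; lra)) as [d3 [Hd3 H3]].
  exists (Rmin d1 (Rmin d2 d3)); split; [repeat apply Rmin_pos; auto|]; intros h Hh.
  pose proof (Rmin_l d1 (Rmin d2 d3)); pose proof (Rmin_r d1 (Rmin d2 d3)).
  pose proof (Rmin_l d2 d3); pose proof (Rmin_r d2 d3).
  specialize (H1 h ltac:(lra)); specialize (H2 h ltac:(lra)); specialize (H3 h ltac:(lra)).
  set (Qf := Cdiv (Csub (f (Cadd a h)) (f a)) h) in *.
  set (Qg := Cdiv (Csub (g (Cadd a h)) (g a)) h) in *.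
  replace (Csub (Cdiv (Csub (Cmul (f (Cadd a h)) (g (Cadd a h))) (Cmul (f a) (g a))) h)
                (Cadd (Cmul lf (g a)) (Cmul (f a) lg)))
    with (Cadd (Csub (Cmul Qf (g (Cadd a h))) (Cmul lf (g a))) (Cmul (f a) (Csub Qg lg)))
    by (unfold Qf, Qg, Cdiv; ring).
  eapply Rle_lt_trans; [apply Cnorm_add|].
  assert (T1 : Cnorm (Csub (Cmul Qf (g (Cadd a h))) (Cmul lf (g a))) < eps / 2)
    by (apply Cmul_close_eps; auto; lra).
  assert (T2 : Cnorm (Cmul (f a) (Csub Qg lg)) < eps / 2).
  { rewrite Cnorm_mul. pose proof (Cnorm_nonneg (Csub Qg lg)).
    apply Rle_lt_trans with (Cnorm (f a) * (eps / (2 * (Cnorm (f a) + 1)))).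
    - apply Rmult_le_compat_l; lra.
    - apply Rlt_le_trans with ((Cnorm (f a) + 1) * (eps / (2 * (Cnorm (f a) + 1)))).
      + apply Rmult_lt_compat_r; [apply Rdiv_lt_0_compat|]; lra.
      + right; field; lra. }
  lra.
Qed.

Lemma Cdiff_affine g al b a : Cdiff_at g (Cadd (Cmul al a) b) ->
  Cdiff_at (fun w => g (Cadd (Cmul al w) b)) a.
Proof.
  intros [l Hg]. destruct (classic (al = C0)) as [->|Hal].
  { apply (Cdiff_ext (fun _ => g b)); [intro; f_equal; ring | apply Cdiff_const]. }
  exists (Cmul al l); intros eps He.
  set (N := Cnorm al). assert (HN : 0 < N) by (apply Cnorm_pos; auto).
  destruct (Hg (eps / (N + 1)) ltac:(apply Rdiv_lt_0_compat; lra)) as [d [Hd H]].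
  exists (d / N); split; [apply Rdiv_lt_0_compat; lra|]; intros h Hh.
  assert (hne : h <> C0) by (apply Cnorm_pos_neq; lra).
  assert (Hh' : 0 < Cnorm (Cmul al h) < d).
  { rewrite Cnorm_mul; fold N; split; [apply Rmult_lt_0_compat; lra|].
    destruct Hh as [_ Hh]; apply Rmult_lt_compat_l with (r := N) in Hh; auto.
    replace (N * (d / N)) with d in Hh by (field; lra); lra. }
  specialize (H _ Hh').
  set (X := Cadd (Cmul al a) b) in *.
  replace (Cadd (Cmul al (Cadd a h)) b) with (Cadd X (Cmul al h)) by (unfold X; ring).
  replace (Csub (Cdiv (Csub (g (Cadd X (Cmul al h))) (g X)) h) (Cmul al l))
    with (Cmul al (Csub (Cdiv (Csub (g (Cadd X (Cmul al h))) (g X)) (Cmul al h)) l)).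
  2: { unfold Cdiv; rewrite Cinv_mul by auto.
       transitivity (Csub (Cmul (Csub (g (Cadd X (Cmul al h))) (g X))
                                (Cmul (Cmul (Cinv al) al) (Cinv h))) (Cmul al l)); [ring|].
       rewrite Cinv_l by auto; ring. }
  rewrite Cnorm_mul; fold N.
  set (x := Cnorm (Csub (Cdiv (Csub (g (Cadd X (Cmul al h))) (g X)) (Cmul al h)) l)) in *.
  assert (0 <= x) by apply Cnorm_nonneg.
  apply Rle_lt_trans with (N * (eps / (N + 1))); [apply Rmult_le_compat_l; lra|].
  apply Rlt_le_trans with ((N + 1) * (eps / (N + 1))); [apply Rmult_lt_compat_r; [apply Rdiv_lt_0_compat|]; lra|].
  right; field; lra.
Qed.

Lemma holo3_const c : holo3 (fun _ _ _ => c).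
Proof. split; intros t z1 z2 Ht; [apply cont3_const | split; [|split]; apply Cdiff_const]. Qed.

Lemma holo3_add f g : holo3 f -> holo3 g -> holo3 (fun t z1 z2 => Cadd (f t z1 z2) (g t z1 z2)).
Proof.
  intros [Cf Df] [Cg Dg]; split; intros t z1 z2 Ht; [apply cont3_add; [exact (Cf t z1 z2 Ht) | exact (Cg t z1 z2 Ht)]|].
  destruct (Df t z1 z2 Ht) as [a1 [a2 a3]], (Dg t z1 z2 Ht) as [b1 [b2 b3]].
  split; [|split]; apply (Cdiff_add (fun s => f _ _ _) (fun s => g _ _ _)); auto.
Qed.

Lemma holo3_mul f g : holo3 f -> holo3 g -> holo3 (fun t z1 z2 => Cmul (f t z1 z2) (g t z1 z2)).
Proof.
  intros [Cf Df] [Cg Dg]; split; intros t z1 z2 Ht; [apply cont3_mul; [exact (Cf t z1 z2 Ht) | exact (Cg t z1 z2 Ht)]|].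
  destruct (Df t z1 z2 Ht) as [a1 [a2 a3]], (Dg t z1 z2 Ht) as [b1 [b2 b3]].
  split; [|split]; apply (Cdiff_mul (fun s => f _ _ _) (fun s => g _ _ _)); auto.
Qed.

Lemma holo3_lin_comp (phi : CC -> CC -> CC) al be : holo2 phi ->
  holo3 (fun t z1 z2 => phi t (Cadd (Cmul al z1) (Cmul be z2))).
Proof.
  intros Hphi; split; intros t z1 z2 Ht; [apply cont3_lin_comp; auto|].
  destruct Hphi as [_ D]. split; [|split].
  - apply (D t _ Ht).
  - apply (Cdiff_affine (phi t)), (D t _ Ht).
  - apply (Cdiff_ext (fun w => phi t (Cadd (Cmul be w) (Cmul al z1)))); [intro; f_equal; ring|].
    apply (Cdiff_affine (phi t)).
    replace (Cadd (Cmul be z2) (Cmul al z1)) with (Cadd (Cmul al z1) (Cmul be z2)) by ring.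
    apply (D t _ Ht).
Qed.

Lemma holo3_Csum {A} (l : list A) (F : A -> CC -> CC -> CC -> CC) :
  (forall x, In x l -> holo3 (F x)) ->
  holo3 (fun t z1 z2 => Csum (map (fun x => F x t z1 z2) l)).
Proof.
  induction l as [|x l IH]; simpl; intros H; [apply holo3_const|].
  apply (holo3_add (F x) (fun t z1 z2 => Csum (map (fun y => F y t z1 z2) l))); auto.
Qed.

(** * Uniqueness of Hermitian Fourier coefficients

    To isolate [p0 = (n0, (a0, b0))] we restrict
    to the points [tau = x + i], [z1 = -(R^2 + R i) x], [z2 = conj z1], on which
    the character of [p = (n, (a, b))] becomes [e(n i) e(K(p) x)] with
    [K(p) = n + R a + R^2 b].  Averaging over [x = j/N], [N = R^3], against
    [e(-K(p0) x)] kills every [p] whose [K(p)] differs from [K(p0)] modulo [N];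
    for [R] large this separates [p0] from any given finite set of indices,
    and the remaining ones form a small tail. *)

Lemma ee_int k : ee (RtoC (IZR k)) = C1.
Proof.
  rewrite ee_real. assert (Hs : sin (IZR k * PI) = 0) by (apply sin_eq_0_1; exists k; auto).
  replace (2 * PI * IZR k) with (2 * (IZR k * PI)) by ring.
  rewrite cos_2a_sin, sin_2a, Hs; apply CC_eq; ring.
Qed.

Lemma ee_real_one x : ee (RtoC x) = C1 -> exists k, x = IZR k.
Proof.
  rewrite ee_real; intro E; injection E; intros E2 E1.
  replace (2 * PI * x) with (2 * (x * PI)) in E1 by ring; rewrite cos_2a_sin in E1.
  assert (Hs : sin (x * PI) = 0) by nra. apply sin_eq_0_0 in Hs; destruct Hs as [k Hk].
  exists k; pose proof PI_RGT_0; apply Rmult_eq_reg_r with PI; lra.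
Qed.

Lemma ee_pow x j : ee (RtoC (x * INR j)) = Cpow (ee (RtoC x)) j.
Proof.
  induction j as [|j IH].
  - simpl; replace (RtoC (x * 0)) with C0 by (cexpand; apply CC_eq; ring); apply ee_0.
  - rewrite S_INR.
    replace (RtoC (x * (INR j + 1))) with (Cadd (RtoC (x * INR j)) (RtoC x))
      by (cexpand; apply CC_eq; ring).
    rewrite ee_add, IH; simpl; ring.
Qed.

Lemma geometric_sum w N :
  Cmul (Csub w C1) (Csum (map (fun j => Cpow w j) (seq 0 N))) = Csub (Cpow w N) C1.
Proof.
  induction N as [|N IH]; [simpl; ring|].
  rewrite seq_S, Csum_app; simpl.
  transitivity (Cadd (Cmul (Csub w C1) (Csum (map (fun j => Cpow w j) (seq 0 N))))
                     (Cmul (Csub w C1) (Cpow w N))); [ring | rewrite IH; ring].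
Qed.

Definition rsum (N : nat) (k : Z) : CC :=
  Csum (map (fun j => ee (RtoC (IZR k * INR j / INR N))) (seq 0 N)).

Lemma rsum_pow N k : rsum N k = Csum (map (fun j => Cpow (ee (RtoC (IZR k / INR N))) j) (seq 0 N)).
Proof. apply Csum_ext; intros j _; rewrite <- ee_pow; do 2 f_equal; unfold Rdiv; ring. Qed.

Lemma rsum_div N k : (0 < N)%nat -> (k mod Z.of_nat N = 0)%Z -> rsum N k = Cnat N.
Proof.
  intros HN Hm. apply Z.mod_divide in Hm; [|lia]. destruct Hm as [q ->].
  rewrite rsum_pow.
  replace (IZR (q * Z.of_nat N) / INR N) with (IZR q)
    by (rewrite mult_IZR, <- INR_IZR_INZ; field; apply not_0_INR; lia).
  rewrite ee_int, (Csum_ext _ (fun _ => C1)).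
  - rewrite <- (length_seq N 0) at 2. generalize (seq 0 N); intro l.
    induction l as [|x l IH]; simpl; [reflexivity|]. rewrite IH.
    unfold Cnat; rewrite S_INR; cexpand; apply CC_eq; ring.
  - intros j _; clear; induction j as [|j IH]; simpl; [|rewrite IH]; ring.
Qed.

Lemma rsum_ndiv N k : (0 < N)%nat -> (k mod Z.of_nat N <> 0)%Z -> rsum N k = C0.
Proof.
  intros HN Hm. rewrite rsum_pow. set (w := ee (RtoC (IZR k / INR N))).
  assert (Hw : w <> C1).
  { intro E. apply ee_real_one in E; destruct E as [q Hq]. apply Hm.
    assert (Hk : IZR k = IZR (q * Z.of_nat N))
      by (rewrite mult_IZR, <- INR_IZR_INZ, <- Hq; field; apply not_0_INR; lia).
    apply eq_IZR in Hk; rewrite Hk; apply Z.mod_mul; lia. }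
  assert (HwN : Cpow w N = C1).
  { unfold w; rewrite <- ee_pow.
    replace (IZR k / INR N * INR N) with (IZR k) by (field; apply not_0_INR; lia).
    apply ee_int. }
  apply (Cmul_eq0 (Csub w C1)); [|rewrite geometric_sum, HwN; ring].
  intro E; apply Hw; replace w with (Cadd (Csub w C1) C1) by ring; rewrite E; ring.
Qed.

Lemma rsum_norm N k : (0 < N)%nat -> Cnorm (rsum N k) <= INR N.
Proof.
  intro HN; destruct (Z.eq_dec (k mod Z.of_nat N) 0).
  - rewrite rsum_div, Cnorm_Cnat; auto; lra.
  - rewrite rsum_ndiv, Cnorm_C0; auto; apply pos_INR.
Qed.

(** Base-[R] digits: with [R = 4M+1], a combination [dn + R da + R^2 db] of
    integers bounded by [2M] is divisible by [R^3] only if all three vanish. *)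
Lemma base_digits_zero (R a b : Z) :
  (0 < R -> Z.abs a < R -> a + R * b = 0 -> a = 0 /\ b = 0)%Z.
Proof. intros; destruct (Z.eq_dec b 0); [subst; lia|]. assert (b >= 1 \/ b <= -1)%Z by lia; nia. Qed.

Lemma digit_separation (M dn da db : Z) : (0 <= M -> Z.abs dn <= 2*M -> Z.abs da <= 2*M ->
  Z.abs db <= 2*M ->
  (dn + (4*M+1)*da + (4*M+1)*(4*M+1)*db) mod ((4*M+1)*(4*M+1)*(4*M+1)) = 0 ->
  dn = 0 /\ da = 0 /\ db = 0)%Z.
Proof.
  intros HM Hn Ha Hb Hm. set (R := (4*M+1)%Z) in *. assert (HR : (0 < R)%Z) by lia.
  apply Z.mod_divide in Hm; [|nia]. destruct Hm as [q Hq].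
  assert (Hq0 : q = 0%Z).
  { assert (Hsmall : (Z.abs (dn + R * da + R * R * db) < R*R*R)%Z).
    { assert (Z.abs (R*da) <= R * (2*M))%Z by (rewrite Z.abs_mul; nia).
      assert (Z.abs (R*R*db) <= R*R*(2*M))%Z by (rewrite Z.abs_mul, Z.abs_mul; nia).
      assert (Z.abs (dn + R * da + R * R * db) <= Z.abs dn + Z.abs (R*da) + Z.abs (R*R*db))%Z
        by lia.
      nia. }
    destruct (Z.eq_dec q 0); auto. assert (q >= 1 \/ q <= -1)%Z by lia.
    rewrite Hq in Hsmall; nia. }
  subst q; simpl in Hq.
  destruct (base_digits_zero R dn (da + R*db) HR ltac:(lia) ltac:(lia)) as [H1 H2].
  destruct (base_digits_zero R da db HR ltac:(lia) H2); auto.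
Qed.

Lemma index_bound (l : list (nat * (Z * Z))) : exists M, (0 <= M)%Z /\ forall p, In p l ->
  (Z.of_nat (fst p) <= M /\ Z.abs (fst (snd p)) <= M /\ Z.abs (snd (snd p)) <= M)%Z.
Proof.
  induction l as [|[n [a b]] l [M [HM IH]]]; [exists 0%Z; split; [lia | intros p []]|].
  exists (Z.max M (Z.max (Z.of_nat n) (Z.max (Z.abs a) (Z.abs b)))); split; [lia|].
  intros p [<-|Hp]; simpl; [lia|]. specialize (IH p Hp); lia.
Qed.

Lemma usum_isolate {I} (dec : forall x y : I, {x = y} + {x <> y}) (u : I -> CC) S p0 :
  has_usum u S ->
  (forall F0 : list I, exists (w : I -> CC) (N : R), 0 < N /\ w p0 = RtoC N
     /\ (forall p, Cnorm (w p) <= N) /\ (forall p, In p F0 -> p <> p0 -> w p = C0)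
     /\ has_usum (fun p => Cmul (u p) (w p)) C0) ->
  u p0 = C0.
Proof.
  intros Hu Hw. destruct (classic (u p0 = C0)) as [|Hne]; auto; exfalso.
  set (eps := Cnorm (u p0) / 4). assert (He : 0 < eps) by (unfold eps; pose proof (Cnorm_pos _ Hne); lra).
  destruct (has_usum_tail dec u S Hu eps He) as [F0 HF0].
  destruct (Hw F0) as [w [N [HN [Hw0 [Hwb [Hwz Huw]]]]]].
  set (v := fun p => Cmul (u p) (w p)).
  destruct (Huw (N * eps) ltac:(nra)) as [F1 HF1].
  set (F := nodup dec (F1 ++ p0 :: F0)).
  assert (HSF : Cnorm (Csub (Csum (map v F)) C0) < N * eps).
  { apply HF1; [apply NoDup_nodup|]. intros x Hx; apply nodup_In, in_or_app; auto. }
  rewrite (Csum_filter v (inb dec (p0 :: F0)) F) in HSF.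
  (* inside [p0 :: F0] only [p0] contributes ... *)
  assert (HA : Csum (map v (filter (inb dec (p0 :: F0)) F)) = Cmul (u p0) (RtoC N)).
  { rewrite <- Hw0. apply (Csum_single v); [apply NoDup_filter, NoDup_nodup| |].
    - apply filter_In; split; [apply nodup_In, in_or_app; right; left; auto|].
      apply (inb_true dec); left; auto.
    - intros y Hy Hne2. apply filter_In in Hy; destruct Hy as [_ Hy].
      apply (inb_true dec) in Hy; destruct Hy as [<-|Hy]; [contradiction|].
      unfold v; rewrite Hwz; auto; ring. }
  (* ... and outside of it the tail of [|u|] is small *)
  assert (HB : Cnorm (Csum (map v (filter (fun x => negb (inb dec (p0 :: F0) x)) F))) < N * eps).
  { eapply Rle_lt_trans; [apply Cnorm_Csum|].
    apply Rle_lt_trans with (Rsuml (fun p => N * Cnorm (u p)) (filter (fun x => negb (inb dec (p0 :: F0) x)) F)).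
    - apply Rsuml_mono; intro p; unfold v; rewrite Cnorm_mul.
      pose proof (Cnorm_nonneg (u p)); pose proof (Hwb p); nra.
    - rewrite Rsuml_scale; apply Rmult_lt_compat_l; auto.
      apply HF0; [apply NoDup_filter, NoDup_nodup|].
      intros x Hx Hx0. apply filter_In in Hx; destruct Hx as [_ Hx].
      apply (inb_false dec) in Hx; apply Hx; right; auto. }
  rewrite HA in HSF.
  assert (Hp0 : Cnorm (Cmul (u p0) (RtoC N)) = N * (4 * eps)).
  { rewrite Cnorm_mul, Cnorm_RtoC, Rabs_right by lra; unfold eps; field. }
  pose proof (Cnorm_sub_le (Cmul (u p0) (RtoC N))
                (Copp (Csum (map v (filter (fun x => negb (inb dec (p0 :: F0) x)) F))))) as T.
  rewrite Cnorm_opp in T.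
  replace (Csub (Cmul (u p0) (RtoC N)) (Copp (Csum (map v (filter (fun x => negb (inb dec (p0 :: F0) x)) F)))))
    with (Csub (Cadd (Cmul (u p0) (RtoC N)) (Csum (map v (filter (fun x => negb (inb dec (p0 :: F0) x)) F)))) C0)
    in T by ring.
  nra.
Qed.

Definition decNZZ : forall x y : nat * (Z * Z), {x = y} + {x <> y}.
Proof. decide equality; [decide equality; apply Z.eq_dec | apply Nat.eq_dec]. Defined.

Definition herm_char (p : nat * (Z * Z)) (t z1 z2 : CC) : CC :=
  ee (Cadd (Cadd (Cmul (Cnat (fst p)) t) (Cmul (sharp_elt (snd p)) z1))
           (Cmul (Cconj (sharp_elt (snd p))) z2)).

(** The sampling points [x + i, -(R^2 + R i) x, -(R^2 - R i) x] turn the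
    character into [e(n i) e(K(p) x)] with [K(p) = n + R a + R^2 b]. *)
Definition digit_key (Rz : Z) (p : nat * (Z * Z)) : Z :=
  (Z.of_nat (fst p) + Rz * fst (snd p) + Rz * Rz * snd (snd p))%Z.

Lemma herm_char_sample Rz p x :
  herm_char p (x, 1) (IZR (- (Rz*Rz)) * x, IZR (- Rz) * x) (IZR (- (Rz*Rz)) * x, IZR Rz * x)
  = Cmul (ee (Cmul (Cnat (fst p)) Ci)) (ee (RtoC (IZR (digit_key Rz p) * x))).
Proof.
  rewrite <- ee_add; unfold herm_char; f_equal.
  destruct p as [n [a b]]; unfold digit_key, sharp_elt; cbn [fst snd]; cexpand.
  apply CC_eq; repeat rewrite ?plus_IZR, ?mult_IZR, ?opp_IZR; rewrite <- ?INR_IZR_INZ; field.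
Qed.

Lemma fourier_zero_average (d : nat * (Z * Z) -> CC) Rz N k0 :
  (0 < N)%nat ->
  (forall t z1 z2, inH t -> has_usum (fun p => Cmul (d p) (herm_char p t z1 z2)) C0) ->
  has_usum (fun p => Cmul (Cmul (d p) (ee (Cmul (Cnat (fst p)) Ci))) (rsum N (digit_key Rz p - k0)))
           C0.
Proof.
  intros HN HD. assert (HNR : 0 < INR N) by (apply lt_0_INR; auto).
  set (xj := fun j : nat => INR j / INR N).
  set (sample := fun (j : nat) (p : nat * (Z * Z)) =>
    Cmul (ee (RtoC (IZR (- k0) * xj j)))
         (Cmul (d p) (herm_char p (xj j, 1) (IZR (- (Rz*Rz)) * xj j, IZR (- Rz) * xj j)
                                            (IZR (- (Rz*Rz)) * xj j, IZR Rz * xj j)))).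
  assert (Hs : has_usum (fun p => Csum (map (fun j => sample j p) (seq 0 N)))
                        (Csum (map (fun _ => C0) (seq 0 N)))).
  { apply has_usum_finsum; intros j _. unfold sample.
    replace C0 with (Cmul (ee (RtoC (IZR (- k0) * xj j))) C0) by ring.
    apply has_usum_scale, HD; unfold inH, Cim; simpl; lra. }
  rewrite Csum_zero in Hs by auto.
  eapply has_usum_ext; [|exact Hs]; intro p.
  unfold rsum; rewrite <- Csum_scale; apply Csum_ext; intros j _.
  unfold sample; rewrite herm_char_sample.
  replace (RtoC (IZR (digit_key Rz p - k0) * INR j / INR N))
    with (Cadd (RtoC (IZR (- k0) * xj j)) (RtoC (IZR (digit_key Rz p) * xj j)))
    by (unfold xj; cexpand; apply CC_eq; rewrite ?minus_IZR, ?opp_IZR; field; lra).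
  rewrite ee_add; ring.
Qed.

Lemma fourier_h_unique f c c' : fourier_h f c -> fourier_h f c' -> forall n ab, c n ab = c' n ab.
Proof.
  intros Hc Hc' n0 ab0. set (p0 := (n0, ab0)).
  set (d := fun p : nat * (Z * Z) => Csub (c (fst p) (snd p)) (c' (fst p) (snd p))).
  assert (HD : forall t z1 z2, inH t -> has_usum (fun p => Cmul (d p) (herm_char p t z1 z2)) C0).
  { intros t z1 z2 Ht.
    pose proof (has_usum_add _ _ _ _ (Hc t z1 z2 Ht) (has_usum_scale _ _ (Copp C1) (Hc' t z1 z2 Ht))) as H.
    replace (Cadd (f t z1 z2) (Cmul (Copp C1) (f t z1 z2))) with C0 in H by ring.
    eapply has_usum_ext; [|exact H]; intros [n ab]; unfold d, herm_char; cbn [fst snd]; ring. }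
  set (u := fun p : nat * (Z * Z) => Cmul (d p) (ee (Cmul (Cnat (fst p)) Ci))).
  assert (Hu : has_usum u C0).
  { eapply has_usum_ext; [|apply (HD Ci C0 C0); unfold inH, Ci, Cim; simpl; lra].
    intro p; unfold u, herm_char; do 2 f_equal; ring. }
  assert (Hup : u p0 = C0).
  { apply (usum_isolate decNZZ u C0 p0 Hu); intro F0.
    destruct (index_bound (p0 :: F0)) as [M [HM HMb]].
    set (Rz := (4*M+1)%Z). set (N := Z.to_nat (Rz*Rz*Rz)).
    assert (HN : Z.of_nat N = (Rz*Rz*Rz)%Z) by (unfold N; apply Z2Nat.id; unfold Rz; nia).
    assert (HN0 : (0 < N)%nat) by (unfold Rz in HN; nia).
    exists (fun p => rsum N (digit_key Rz p - digit_key Rz p0)), (INR N).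
    split; [apply lt_0_INR; auto|]. split; [rewrite Z.sub_diag, rsum_div; auto|].
    split; [intro; apply rsum_norm; auto|]. split; [|apply fourier_zero_average; auto].
    intros [n [a b]] Hp Hne. apply rsum_ndiv; auto. intro Hm; apply Hne.
    pose proof (HMb _ (or_intror Hp)) as B1; pose proof (HMb p0 (or_introl eq_refl)) as B0.
    destruct ab0 as [a0 b0]; unfold p0 in *; cbn [fst snd] in B0, B1.
    rewrite HN in Hm; unfold digit_key, Rz in Hm; cbn [fst snd] in Hm.
    destruct (digit_separation M (Z.of_nat n - Z.of_nat n0) (a - a0) (b - b0)) as [E1 [E2 E3]];
      try lia.
    - rewrite <- Hm; f_equal; ring.
    - f_equal; [lia | f_equal; lia]. }
  assert (Hd : d p0 = C0) by (apply (Cmul_eq0 (ee (Cmul (Cnat (fst p0)) Ci))); [apply ee_neq0 | rewrite <- Hup; unfold u; ring]).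
  unfold d, p0 in Hd; cbn [fst snd] in Hd.
  replace (c n0 ab0) with (Cadd (Csub (c n0 ab0) (c' n0 ab0)) (c' n0 ab0)) by ring; rewrite Hd; ring.
Qed.

(** * Products of Jacobi forms along linear forms

    Its transformation laws are inherited
    from those of [phi1] and [phi2] as soon as [w1^2 + w2^2 = z1 z2] (for the
    modular group) and the Heisenberg shifts of [(z1, z2)] induce integral
    shifts of [w1] and [w2]; its Fourier expansion is the Cauchy product of
    the two classical ones, re-indexed by a bijection of [Z^2]. *)

Definition lin_prod (phi1 phi2 : CC -> CC -> CC) (al be ga de : CC) : CC -> CC -> CC -> CC :=
  fun t z1 z2 => Cmul (phi1 t (Cadd (Cmul al z1) (Cmul be z2)))
                      (phi2 t (Cadd (Cmul ga z1) (Cmul de z2))).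

Definition modular_cl (k m : nat) (phi : CC -> CC -> CC) : Prop :=
  forall a b c d, isSL2 a b c d -> forall t z, inH t -> slash_cl k m a b c d phi t z = phi t z.

Definition heis_invariant_cl (m : nat) (phi : CC -> CC -> CC) : Prop :=
  forall l mu t z, inH t -> heis_cl m l mu phi t z = phi t z.

Lemma lin_prod_modular k1 k2 m phi1 phi2 al be ga de :
  modular_cl k1 m phi1 -> modular_cl k2 m phi2 ->
  (forall z1 z2, Cadd (Cmul (Cadd (Cmul al z1) (Cmul be z2)) (Cadd (Cmul al z1) (Cmul be z2)))
                      (Cmul (Cadd (Cmul ga z1) (Cmul de z2)) (Cadd (Cmul ga z1) (Cmul de z2)))
                 = Cmul z1 z2) ->
  forall a b c d, isSL2 a b c d -> forall t z1 z2, inH t ->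
    slash_h (k1 + k2) m a b c d (lin_prod phi1 phi2 al be ga de) t z1 z2
    = lin_prod phi1 phi2 al be ga de t z1 z2.
Proof.
  intros S1 S2 Hq a b c d HS t z1 z2 Ht.
  pose proof (automorphy_factor_neq0 _ _ _ _ _ HS Ht) as Hj.
  unfold slash_h, lin_prod.
  set (w1 := Cadd (Cmul al z1) (Cmul be z2)); set (w2 := Cadd (Cmul ga z1) (Cmul de z2)).
  rewrite <- (S1 a b c d HS t w1 Ht), <- (S2 a b c d HS t w2 Ht); unfold slash_cl.
  set (j := Cadd (Cmul (CZ c) t) (CZ d)).
  replace (Cadd (Cmul al (Cdiv z1 j)) (Cmul be (Cdiv z2 j))) with (Cdiv w1 j)
    by (unfold w1, Cdiv; ring).
  replace (Cadd (Cmul ga (Cdiv z1 j)) (Cmul de (Cdiv z2 j))) with (Cdiv w2 j)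
    by (unfold w2, Cdiv; ring).
  (* the index factors multiply because [w1^2 + w2^2 = z1 z2] *)
  replace (Copp (Cdiv (Cmul (Cmul (Cnat m) (CZ c)) (Cmul z1 z2)) j))
    with (Cadd (Copp (Cdiv (Cmul (Cmul (Cnat m) (CZ c)) (Cmul w1 w1)) j))
               (Copp (Cdiv (Cmul (Cmul (Cnat m) (CZ c)) (Cmul w2 w2)) j)))
    by (unfold Cdiv; rewrite <- (Hq z1 z2); fold w1 w2; ring).
  rewrite ee_add, Cpow_add, Cinv_mul by (apply Cpow_neq0; exact Hj).
  ring.
Qed.

Lemma lin_prod_heis m phi1 phi2 al be ga de (l mu : CC) (A B C D : Z) :
  heis_invariant_cl m phi1 -> heis_invariant_cl m phi2 ->
  Cadd (Cmul al l) (Cmul be (Cconj l)) = CZ A ->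
  Cadd (Cmul al mu) (Cmul be (Cconj mu)) = CZ B ->
  Cadd (Cmul ga l) (Cmul de (Cconj l)) = CZ C ->
  Cadd (Cmul ga mu) (Cmul de (Cconj mu)) = CZ D ->
  (forall t z1 z2,
     Cadd (Cadd (Cmul (RtoC (Nrm l)) t) (Cmul (Cconj l) z1)) (Cmul l z2)
     = Cadd (Cadd (Cmul (CZ (A*A)) t) (Cmul (CZ (2*A)) (Cadd (Cmul al z1) (Cmul be z2))))
            (Cadd (Cmul (CZ (C*C)) t) (Cmul (CZ (2*C)) (Cadd (Cmul ga z1) (Cmul de z2))))) ->
  forall t z1 z2, inH t ->
    heis_h m l mu (lin_prod phi1 phi2 al be ga de) t z1 z2 = lin_prod phi1 phi2 al be ga de t z1 z2.
Proof.
  intros H1 H2 HA HB HC HD HE t z1 z2 Ht.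
  unfold heis_h, lin_prod.
  set (w1 := Cadd (Cmul al z1) (Cmul be z2)); set (w2 := Cadd (Cmul ga z1) (Cmul de z2)).
  rewrite <- (H1 A B t w1 Ht), <- (H2 C D t w2 Ht); unfold heis_cl.
  (* the shift of [(z1, z2)] by [(l tau + mu, conj l tau + conj mu)] shifts [w1] by
     [A tau + B] and [w2] by [C tau + D] *)
  replace (Cadd (Cmul al (Cadd z1 (Cadd (Cmul l t) mu)))
                (Cmul be (Cadd z2 (Cadd (Cmul (Cconj l) t) (Cconj mu)))))
    with (Cadd w1 (Cadd (Cmul (CZ A) t) (CZ B))) by (rewrite <- HA, <- HB; unfold w1; ring).
  replace (Cadd (Cmul ga (Cadd z1 (Cadd (Cmul l t) mu)))
                (Cmul de (Cadd z2 (Cadd (Cmul (Cconj l) t) (Cconj mu)))))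
    with (Cadd w2 (Cadd (Cmul (CZ C) t) (CZ D))) by (rewrite <- HC, <- HD; unfold w2; ring).
  rewrite HE; fold w1 w2.
  replace (Cmul (Cnat m) (Cadd (Cadd (Cmul (CZ (A * A)) t) (Cmul (CZ (2 * A)) w1))
                               (Cadd (Cmul (CZ (C * C)) t) (Cmul (CZ (2 * C)) w2))))
    with (Cadd (Cmul (Cnat m) (Cadd (Cmul (CZ (A * A)) t) (Cmul (CZ (2 * A)) w1)))
               (Cmul (Cnat m) (Cadd (Cmul (CZ (C * C)) t) (Cmul (CZ (2 * C)) w2)))) by ring.
  rewrite ee_add; ring.
Qed.

Lemma lin_prod_holo phi1 phi2 al be ga de :
  holo2 phi1 -> holo2 phi2 -> holo3 (lin_prod phi1 phi2 al be ga de).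
Proof.
  intros H1 H2.
  apply (holo3_mul (fun t z1 z2 => phi1 t (Cadd (Cmul al z1) (Cmul be z2)))
                   (fun t z1 z2 => phi2 t (Cadd (Cmul ga z1) (Cmul de z2))));
    apply holo3_lin_comp; auto.
Qed.

(** The coefficient of [e(n tau) e(r1 w1 + r2 w2)] in the product of two
    classical expansions with coefficients [c1], [c2]. *)
Definition conv_coef (c1 c2 : nat -> Z -> CC) (n : nat) (r : Z * Z) : CC :=
  Csum (map (fun n1 => Cmul (c1 n1 (fst r)) (c2 (n - n1)%nat (snd r))) (seq 0 (S n))).

(** Pairs of classical indices [((n1, r1), (n2, r2))] are grouped by
    [(n1 + n2, pi (r1, r2))]; [conv_fiber sg e] lists the fibre over [e]. *)
Definition conv_index (pi : Z * Z -> Z * Z) (q : (nat * Z) * (nat * Z)) : nat * (Z * Z) :=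
  ((fst (fst q) + fst (snd q))%nat, pi (snd (fst q), snd (snd q))).

Definition conv_fiber (sg : Z * Z -> Z * Z) (e : nat * (Z * Z)) : list ((nat * Z) * (nat * Z)) :=
  map (fun n1 => ((n1, fst (sg (snd e))), ((fst e - n1)%nat, snd (sg (snd e))))) (seq 0 (S (fst e))).

Lemma conv_fiber_NoDup sg e : NoDup (conv_fiber sg e).
Proof.
  apply FinFun.Injective_map_NoDup; [|apply seq_NoDup].
  intros x y E; inversion E; auto.
Qed.

Lemma conv_fiber_spec (pi sg : Z * Z -> Z * Z) :
  (forall r, sg (pi r) = r) -> (forall ab, pi (sg ab) = ab) ->
  forall q e, In q (conv_fiber sg e) <-> conv_index pi q = e.
Proof.
  intros Hsp Hps [[n1 r1] [n2 r2]] [n ab]; unfold conv_fiber, conv_index; cbn [fst snd]; split.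
  - intro H. apply in_map_iff in H; destruct H as [k [E Hk]]; apply in_seq in Hk.
    inversion E; subst; f_equal; [lia | rewrite <- surjective_pairing; apply Hps].
  - intro H; inversion H; subst. apply in_map_iff; exists n1; split; [|apply in_seq; lia].
    rewrite Hsp; simpl; do 2 f_equal; lia.
Qed.

Definition decNZ : forall x y : nat * Z, {x = y} + {x <> y}.
Proof. decide equality; [apply Z.eq_dec | apply Nat.eq_dec]. Defined.

Lemma lin_prod_fourier phi1 phi2 c1 c2 al be ga de (pi sg : Z * Z -> Z * Z) :
  fourier_cl phi1 c1 -> fourier_cl phi2 c2 ->
  (forall r, sg (pi r) = r) -> (forall ab, pi (sg ab) = ab) ->
  (forall r z1 z2,
     Cadd (Cmul (CZ (fst r)) (Cadd (Cmul al z1) (Cmul be z2)))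
          (Cmul (CZ (snd r)) (Cadd (Cmul ga z1) (Cmul de z2)))
     = Cadd (Cmul (sharp_elt (pi r)) z1) (Cmul (Cconj (sharp_elt (pi r))) z2)) ->
  fourier_h (lin_prod phi1 phi2 al be ga de) (fun n ab => conv_coef c1 c2 n (sg ab)).
Proof.
  intros F1 F2 Hsp Hps HE t z1 z2 Ht.
  set (w1 := Cadd (Cmul al z1) (Cmul be z2)); set (w2 := Cadd (Cmul ga z1) (Cmul de z2)).
  pose proof (has_usum_prod decNZ decNZ _ _ _ _ (F1 t w1 Ht) (F2 t w2 Ht)) as SP.
  pose proof (has_usum_fiber _ _ (conv_index pi) (conv_fiber sg) (conv_fiber_NoDup sg)
                (conv_fiber_spec pi sg Hsp Hps) SP) as SF.
  eapply has_usum_ext; [|exact SF]; intros [n ab]; cbv zeta; cbn [fst snd].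
  unfold conv_fiber, conv_coef; rewrite map_map; cbn [fst snd].
  rewrite <- Csum_scale_r; apply Csum_ext; intros n1 Hn1; apply in_seq in Hn1.
  (* each term of the fibre carries the character of [(n, ab)] *)
  set (r := sg ab).
  assert (Eab : ab = pi r) by (unfold r; symmetry; apply Hps).
  rewrite Eab.
  replace (Cnat n) with (Cadd (Cnat n1) (Cnat (n - n1))) by (rewrite <- Cnat_add; f_equal; lia).
  replace (Cadd (Cadd (Cmul (Cadd (Cnat n1) (Cnat (n - n1))) t) (Cmul (sharp_elt (pi r)) z1))
                (Cmul (Cconj (sharp_elt (pi r))) z2))
    with (Cadd (Cadd (Cmul (Cnat n1) t) (Cmul (CZ (fst r)) w1))
               (Cadd (Cmul (Cnat (n - n1)) t) (Cmul (CZ (snd r)) w2)))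
    by (symmetry; transitivity (Cadd (Cadd (Cmul (Cnat n1) t) (Cmul (Cnat (n - n1)) t))
                           (Cadd (Cmul (sharp_elt (pi r)) z1) (Cmul (Cconj (sharp_elt (pi r))) z2)));
        [ring | rewrite <- (HE r z1 z2); fold w1 w2; ring]).
  rewrite (ee_add (Cadd (Cmul (Cnat n1) t) (Cmul (CZ (fst r)) w1))); ring.
Qed.

(** * Gaussian units and the twisted products [(phi1 x phi2) |_k eps I] *)

Definition gmul (x y : Z * Z) : Z * Z :=
  ((fst x * fst y - snd x * snd y)%Z, (fst x * snd y + snd x * fst y)%Z).
Definition gconj (x : Z * Z) : Z * Z := (fst x, (- snd x)%Z).
Definition gnorm (x : Z * Z) : Z := (fst x * fst x + snd x * snd x)%Z.
Definition gauss (x : Z * Z) : CC := Cgauss (fst x) (snd x).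

Definition gauss_units : list (Z * Z) := [(1, 0); (-1, 0); (0, 1); (0, -1)]%Z.

Lemma gauss_units_norm e : In e gauss_units -> gnorm e = 1%Z.
Proof. intros [<-|[<-|[<-|[<-|[]]]]]; reflexivity. Qed.

Lemma units_OK_gauss : units_OK = map gauss gauss_units.
Proof. unfold units_OK, gauss_units, gauss; cexpand; repeat f_equal; ring. Qed.

Lemma gnorm_gmul x y : gnorm (gmul x y) = (gnorm x * gnorm y)%Z.
Proof. destruct x, y; unfold gnorm, gmul; simpl; ring. Qed.

Lemma gmul_conj_l e x : gmul (gconj e) (gmul e x) = ((gnorm e * fst x)%Z, (gnorm e * snd x)%Z).
Proof. destruct e, x; unfold gmul, gconj, gnorm; simpl; f_equal; ring. Qed.

Lemma gmul_conj_r e x : gmul e (gmul (gconj e) x) = ((gnorm e * fst x)%Z, (gnorm e * snd x)%Z).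
Proof. destruct e, x; unfold gmul, gconj, gnorm; simpl; f_equal; ring. Qed.

Lemma Nrm_sharp ab : Nrm (sharp_elt ab) = IZR (gnorm ab) / 4.
Proof. destruct ab; unfold sharp_elt, gnorm; cexpand; rewrite plus_IZR, !mult_IZR; field. Qed.

Ltac zexpand := repeat rewrite ?mult_IZR, ?plus_IZR, ?minus_IZR, ?opp_IZR.

Definition half : CC := RtoC (1/2).

Definition unit_twist (k : nat) (phi1 phi2 : CC -> CC -> CC) (eps : CC) : CC -> CC -> CC -> CC :=
  fun t z1 z2 => Cmul (Cinv (Cpow eps k))
    (lin_prod phi1 phi2 (Cmul eps half) (Cmul (Cconj eps) half)
              (Cmul Ci (Cmul eps half)) (Copp (Cmul Ci (Cmul (Cconj eps) half))) t z1 z2).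

Lemma slash_unit_prodF k eps phi1 phi2 :
  slash_unit k eps (prodF phi1 phi2) = unit_twist k phi1 phi2 eps.
Proof.
  apply functional_extensionality; intro t; apply functional_extensionality; intro z1;
  apply functional_extensionality; intro z2.
  unfold slash_unit, prodF, unit_twist, lin_prod, half; do 2 f_equal; f_equal; ring.
Qed.

Lemma Hmap_units k1 k2 phi1 phi2 : Hmap k1 k2 phi1 phi2 =
  fun t z1 z2 => Csum (map (fun e => unit_twist (k1 + k2) phi1 phi2 (gauss e) t z1 z2) gauss_units).
Proof.
  unfold Hmap; rewrite units_OK_gauss.
  apply functional_extensionality; intro t; apply functional_extensionality; intro z1;
  apply functional_extensionality; intro z2.
  rewrite map_map; f_equal; apply map_ext; intro e; rewrite slash_unit_prodF; reflexivity.
Qed.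

Lemma unit_twist_quadratic eps z1 z2 :
  Cadd (Cmul (Cadd (Cmul (Cmul eps half) z1) (Cmul (Cmul (Cconj eps) half) z2))
             (Cadd (Cmul (Cmul eps half) z1) (Cmul (Cmul (Cconj eps) half) z2)))
       (Cmul (Cadd (Cmul (Cmul Ci (Cmul eps half)) z1) (Cmul (Copp (Cmul Ci (Cmul (Cconj eps) half))) z2))
             (Cadd (Cmul (Cmul Ci (Cmul eps half)) z1) (Cmul (Copp (Cmul Ci (Cmul (Cconj eps) half))) z2)))
  = Cmul (RtoC (Nrm eps)) (Cmul z1 z2).
Proof. unfold half; csplit; cexpand; apply CC_eq; field. Qed.

Lemma unit_shift_w1 e l :
  Cadd (Cmul (Cmul (gauss e) half) (gauss l)) (Cmul (Cmul (Cconj (gauss e)) half) (Cconj (gauss l)))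
  = CZ (fst (gmul e l)).
Proof. destruct e, l; unfold gauss, gmul, half; cexpand; apply CC_eq; zexpand; field. Qed.

Lemma unit_shift_w2 e l :
  Cadd (Cmul (Cmul Ci (Cmul (gauss e) half)) (gauss l))
       (Cmul (Copp (Cmul Ci (Cmul (Cconj (gauss e)) half))) (Cconj (gauss l)))
  = CZ (- snd (gmul e l)).
Proof. destruct e, l; unfold gauss, gmul, half; cexpand; apply CC_eq; zexpand; field. Qed.

Lemma unit_heis_index e l t z1 z2 :
  Cmul (RtoC (IZR (gnorm e)))
    (Cadd (Cadd (Cmul (RtoC (Nrm (gauss l))) t) (Cmul (Cconj (gauss l)) z1)) (Cmul (gauss l) z2))
  = Cadd (Cadd (Cmul (CZ (fst (gmul e l) * fst (gmul e l))) t)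
               (Cmul (CZ (2 * fst (gmul e l)))
                     (Cadd (Cmul (Cmul (gauss e) half) z1) (Cmul (Cmul (Cconj (gauss e)) half) z2))))
         (Cadd (Cmul (CZ (- snd (gmul e l) * - snd (gmul e l))) t)
               (Cmul (CZ (2 * - snd (gmul e l)))
                     (Cadd (Cmul (Cmul Ci (Cmul (gauss e) half)) z1)
                           (Cmul (Copp (Cmul Ci (Cmul (Cconj (gauss e)) half))) z2)))).
Proof.
  rewrite !CZ_mul, !CZ_opp; destruct e, l; unfold gauss, gmul, gnorm, half; csplit; cexpand.
  apply CC_eq; zexpand; field.
Qed.

(** Fourier indices: [(r1, r2)] for [(w1, w2)] corresponds to
    [ab = -i eps (r1 + i r2)] for [(z1, z2)]; the inverse is
    [r = conj(eps) (i ab)]. *)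
Definition unit_index (e r : Z * Z) : Z * Z := (snd (gmul e r), (- fst (gmul e r))%Z).
Definition unit_index_inv (e ab : Z * Z) : Z * Z := gmul (gconj e) ((- snd ab)%Z, fst ab).

Lemma unit_index_char e r z1 z2 :
  Cadd (Cmul (CZ (fst r)) (Cadd (Cmul (Cmul (gauss e) half) z1) (Cmul (Cmul (Cconj (gauss e)) half) z2)))
       (Cmul (CZ (snd r)) (Cadd (Cmul (Cmul Ci (Cmul (gauss e) half)) z1)
                                (Cmul (Copp (Cmul Ci (Cmul (Cconj (gauss e)) half))) z2)))
  = Cadd (Cmul (sharp_elt (unit_index e r)) z1) (Cmul (Cconj (sharp_elt (unit_index e r))) z2).
Proof. destruct e, r; unfold gauss, gmul, unit_index, sharp_elt, half; csplit; cexpand; apply CC_eq; zexpand; field. Qed.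

Lemma unit_index_inv_l e r : gnorm e = 1%Z -> unit_index_inv e (unit_index e r) = r.
Proof.
  intro He; unfold unit_index_inv, unit_index; cbn [fst snd].
  rewrite Z.opp_involutive, <- surjective_pairing, gmul_conj_l, He, !Z.mul_1_l.
  destruct r; reflexivity.
Qed.

Lemma unit_index_inv_r e ab : gnorm e = 1%Z -> unit_index e (unit_index_inv e ab) = ab.
Proof.
  intro He; unfold unit_index_inv, unit_index; rewrite gmul_conj_r, He, !Z.mul_1_l.
  destruct ab; simpl; rewrite Z.opp_involutive; reflexivity.
Qed.

Lemma unit_index_inv_norm e ab : gnorm e = 1%Z -> gnorm (unit_index_inv e ab) = gnorm ab.
Proof.
  intro He; unfold unit_index_inv; rewrite gnorm_gmul.
  replace (gnorm (gconj e)) with (gnorm e) by (unfold gnorm, gconj; simpl; ring).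
  rewrite He; destruct ab; unfold gnorm; cbn [fst snd]; ring.
Qed.

Lemma slash_h_scale k m a b c d s (F : CC -> CC -> CC -> CC) t z1 z2 :
  slash_h k m a b c d (fun t z1 z2 => Cmul s (F t z1 z2)) t z1 z2 = Cmul s (slash_h k m a b c d F t z1 z2).
Proof. unfold slash_h; ring. Qed.

Lemma heis_h_scale m l mu s (F : CC -> CC -> CC -> CC) t z1 z2 :
  heis_h m l mu (fun t z1 z2 => Cmul s (F t z1 z2)) t z1 z2 = Cmul s (heis_h m l mu F t z1 z2).
Proof. unfold heis_h; ring. Qed.

Lemma fourier_h_scale s F c : fourier_h F c ->
  fourier_h (fun t z1 z2 => Cmul s (F t z1 z2)) (fun n ab => Cmul s (c n ab)).
Proof.
  intros HF t z1 z2 Ht; eapply has_usum_ext; [|apply has_usum_scale, (HF t z1 z2 Ht)].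
  intros [n ab]; cbv beta zeta; ring.
Qed.

Lemma slash_h_Csum {A} k m a b c d (l : list A) (F : A -> CC -> CC -> CC -> CC) t z1 z2 :
  (forall x, In x l -> slash_h k m a b c d (F x) t z1 z2 = F x t z1 z2) ->
  slash_h k m a b c d (fun t z1 z2 => Csum (map (fun x => F x t z1 z2) l)) t z1 z2
  = Csum (map (fun x => F x t z1 z2) l).
Proof.
  intro H; unfold slash_h at 1; rewrite <- Csum_scale; apply Csum_ext.
  intros x Hx; rewrite <- (H x Hx); reflexivity.
Qed.

Lemma heis_h_Csum {A} m l mu (L : list A) (F : A -> CC -> CC -> CC -> CC) t z1 z2 :
  (forall x, In x L -> heis_h m l mu (F x) t z1 z2 = F x t z1 z2) ->
  heis_h m l mu (fun t z1 z2 => Csum (map (fun x => F x t z1 z2) L)) t z1 z2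
  = Csum (map (fun x => F x t z1 z2) L).
Proof.
  intro H; unfold heis_h at 1; rewrite <- Csum_scale; apply Csum_ext.
  intros x Hx; rewrite <- (H x Hx); reflexivity.
Qed.

Lemma fourier_h_Csum {A} (L : list A) (F : A -> CC -> CC -> CC -> CC) (c : A -> nat -> Z * Z -> CC) :
  (forall x, In x L -> fourier_h (F x) (c x)) ->
  fourier_h (fun t z1 z2 => Csum (map (fun x => F x t z1 z2) L))
            (fun n ab => Csum (map (fun x => c x n ab) L)).
Proof.
  intros H t z1 z2 Ht.
  eapply has_usum_ext; [|apply (has_usum_finsum L (fun x p => Cmul (c x (fst p) (snd p))
      (herm_char p t z1 z2)) (fun x => F x t z1 z2)); intros x Hx; apply (H x Hx t z1 z2 Ht)].
  intro p; cbv beta zeta; rewrite <- Csum_scale_r; reflexivity.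
Qed.

Lemma unit_twist_modular k1 k2 m phi1 phi2 e : gnorm e = 1%Z ->
  modular_cl k1 m phi1 -> modular_cl k2 m phi2 ->
  forall a b c d, isSL2 a b c d -> forall t z1 z2, inH t ->
    slash_h (k1 + k2) m a b c d (unit_twist (k1 + k2) phi1 phi2 (gauss e)) t z1 z2
    = unit_twist (k1 + k2) phi1 phi2 (gauss e) t z1 z2.
Proof.
  intros He S1 S2 a b c d HS t z1 z2 Ht; unfold unit_twist; rewrite slash_h_scale.
  rewrite (lin_prod_modular k1 k2 m); auto.
  intros w1 w2; rewrite unit_twist_quadratic.
  replace (Nrm (gauss e)) with (IZR (gnorm e))
    by (destruct e; unfold gauss, gnorm, Nrm, Cgauss, Cre, Cim; cbn [fst snd]; zexpand; ring).
  rewrite He; change (RtoC (IZR 1)) with C1; ring.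
Qed.

Lemma unit_twist_heis k m phi1 phi2 e : gnorm e = 1%Z ->
  heis_invariant_cl m phi1 -> heis_invariant_cl m phi2 ->
  forall l1 l2 mu1 mu2 t z1 z2, inH t ->
    heis_h m (Cgauss l1 l2) (Cgauss mu1 mu2) (unit_twist k phi1 phi2 (gauss e)) t z1 z2
    = unit_twist k phi1 phi2 (gauss e) t z1 z2.
Proof.
  intros He H1 H2 l1 l2 mu1 mu2 t z1 z2 Ht; unfold unit_twist; rewrite heis_h_scale.
  rewrite (lin_prod_heis m phi1 phi2 _ _ _ _ (gauss (l1, l2)) (gauss (mu1, mu2))
             (fst (gmul e (l1, l2))) (fst (gmul e (mu1, mu2)))
             (- snd (gmul e (l1, l2))) (- snd (gmul e (mu1, mu2))));
    auto using unit_shift_w1, unit_shift_w2.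
  intros t' w1 w2; rewrite <- unit_heis_index, He; change (RtoC (IZR 1)) with C1; ring.
Qed.

Lemma unit_twist_fourier k phi1 phi2 c1 c2 e : gnorm e = 1%Z ->
  fourier_cl phi1 c1 -> fourier_cl phi2 c2 ->
  fourier_h (unit_twist k phi1 phi2 (gauss e))
    (fun n ab => Cmul (Cinv (Cpow (gauss e) k)) (conv_coef c1 c2 n (unit_index_inv e ab))).
Proof.
  intros He F1 F2; apply fourier_h_scale.
  apply (lin_prod_fourier phi1 phi2 c1 c2 _ _ _ _ (unit_index e) (unit_index_inv e)); auto.
  - intro r; apply unit_index_inv_l; auto.
  - intro ab; apply unit_index_inv_r; auto.
  - intros r z1 z2; apply unit_index_char.
Qed.

Lemma unit_twist_holo k phi1 phi2 eps : holo2 phi1 -> holo2 phi2 ->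
  holo3 (unit_twist k phi1 phi2 eps).
Proof.
  intros H1 H2; apply (holo3_mul (fun _ _ _ => Cinv (Cpow eps k))); [apply holo3_const|].
  apply lin_prod_holo; auto.
Qed.

(** * Fourier coefficients of [H(phi1, phi2)] *)

Definition supported_cl (m : nat) (c : nat -> Z -> CC) : Prop :=
  forall n r, ~ (IZR r * IZR r <= 4 * INR n * INR m) -> c n r = C0.

Definition cuspidal_cl (m : nat) (c : nat -> Z -> CC) : Prop :=
  forall n r, IZR r * IZR r = 4 * INR n * INR m -> c n r = C0.

(** In [c1(n1, r1) c2(n - n1, r2)] one factor vanishes when [r1^2 + r2^2 > 4nm]
    (since [4 n1 m + 4 (n - n1) m = 4nm]) ... *)
Lemma conv_coef_support m c1 c2 n r : supported_cl m c1 -> supported_cl m c2 ->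
  ~ (IZR (gnorm r) <= 4 * INR n * INR m) -> conv_coef c1 c2 n r = C0.
Proof.
  intros S1 S2 H; unfold gnorm in H; rewrite plus_IZR, !mult_IZR in H.
  apply Csum_zero; intros n1 Hn1; apply in_seq in Hn1.
  assert (E : INR (n - n1) = INR n - INR n1) by (apply minus_INR; lia).
  destruct (Rle_dec (IZR (fst r) * IZR (fst r)) (4 * INR n1 * INR m)).
  - rewrite (S2 (n - n1)%nat (snd r)); [ring | rewrite E; lra].
  - rewrite (S1 n1 (fst r)); [ring | auto].
Qed.

Lemma conv_coef_cusp m c1 c2 n r : supported_cl m c1 -> supported_cl m c2 ->
  cuspidal_cl m c1 -> cuspidal_cl m c2 ->
  IZR (gnorm r) = 4 * INR n * INR m -> conv_coef c1 c2 n r = C0.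
Proof.
  intros S1 S2 K1 K2 H; unfold gnorm in H; rewrite plus_IZR, !mult_IZR in H.
  apply Csum_zero; intros n1 Hn1; apply in_seq in Hn1.
  assert (E : INR (n - n1) = INR n - INR n1) by (apply minus_INR; lia).
  destruct (Rtotal_order (IZR (fst r) * IZR (fst r)) (4 * INR n1 * INR m)) as [Hl|[He|Hg]].
  - rewrite (S2 (n - n1)%nat (snd r)); [ring | rewrite E; lra].
  - rewrite (K1 n1 (fst r) He); ring.
  - rewrite (S1 n1 (fst r)); [ring | lra].
Qed.

Definition H_coef (k : nat) (c1 c2 : nat -> Z -> CC) (n : nat) (ab : Z * Z) : CC :=
  Csum (map (fun e => Cmul (Cinv (Cpow (gauss e) k)) (conv_coef c1 c2 n (unit_index_inv e ab)))
            gauss_units).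

Lemma Hmap_fourier k1 k2 phi1 phi2 c1 c2 : fourier_cl phi1 c1 -> fourier_cl phi2 c2 ->
  fourier_h (Hmap k1 k2 phi1 phi2) (H_coef (k1 + k2) c1 c2).
Proof.
  intros F1 F2; rewrite Hmap_units; unfold H_coef.
  apply (fourier_h_Csum gauss_units (fun e => unit_twist (k1 + k2) phi1 phi2 (gauss e))
           (fun e n ab => Cmul (Cinv (Cpow (gauss e) (k1 + k2))) (conv_coef c1 c2 n (unit_index_inv e ab)))).
  intros e He; apply unit_twist_fourier; auto using gauss_units_norm.
Qed.

(** Multiplication by a unit preserves the norm, so the index [ab] of [H]
    and the indices [(r1, r2)] of [phi1 x phi2] satisfy [N(sharp ab) = (r1^2 + r2^2)/4]. *)
Lemma H_coef_support k m c1 c2 n ab : supported_cl m c1 -> supported_cl m c2 ->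
  ~ (Nrm (sharp_elt ab) <= INR n * INR m) -> H_coef k c1 c2 n ab = C0.
Proof.
  intros S1 S2 H; apply Csum_zero; intros e He.
  rewrite (conv_coef_support m); auto; [ring|].
  rewrite unit_index_inv_norm by (apply gauss_units_norm; auto).
  rewrite Nrm_sharp in H; lra.
Qed.

Lemma H_coef_cusp k m c1 c2 n ab : supported_cl m c1 -> supported_cl m c2 ->
  cuspidal_cl m c1 -> cuspidal_cl m c2 ->
  Nrm (sharp_elt ab) = INR n * INR m -> H_coef k c1 c2 n ab = C0.
Proof.
  intros S1 S2 K1 K2 H; apply Csum_zero; intros e He.
  rewrite (conv_coef_cusp m); auto; [ring|].
  rewrite unit_index_inv_norm by (apply gauss_units_norm; auto).
  rewrite Nrm_sharp in H; lra.
Qed.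

Lemma Hmap_HermJacobiForm k1 k2 m phi1 phi2 :
  JacobiForm k1 m phi1 -> JacobiForm k2 m phi2 -> HermJacobiForm (k1 + k2) m (Hmap k1 k2 phi1 phi2).
Proof.
  intros [Hol1 [Mod1 [Heis1 [c1 [Sup1 F1]]]]] [Hol2 [Mod2 [Heis2 [c2 [Sup2 F2]]]]].
  split; [|split; [|split]].
  - rewrite Hmap_units; apply holo3_Csum; intros e _; apply unit_twist_holo; auto.
  - intros a b c d HS t z1 z2 Ht; rewrite Hmap_units; apply slash_h_Csum; intros e He.
    apply unit_twist_modular; auto using gauss_units_norm.
  - intros l1 l2 mu1 mu2 t z1 z2 Ht; rewrite Hmap_units; apply heis_h_Csum; intros e He.
    apply unit_twist_heis; auto using gauss_units_norm.
  - exists (H_coef (k1 + k2) c1 c2); split; [|apply Hmap_fourier; auto].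
    intros n ab; apply H_coef_support; auto.
Qed.

Theorem proposition4p5 (k1 k2 m : nat) (hk1 : (0 < k1)%nat) (hk2 : (0 < k2)%nat)
  (hm : (0 < m)%nat) (phi1 phi2 : CC -> CC -> CC) :
  JacobiForm k1 m phi1 -> JacobiForm k2 m phi2 ->
  HermJacobiForm (k1 + k2) m (Hmap k1 k2 phi1 phi2)
  /\ (JacobiCuspForm k1 m phi1 -> JacobiCuspForm k2 m phi2 ->
      HermJacobiCuspForm (k1 + k2) m (Hmap k1 k2 phi1 phi2)).
Proof.
  intros J1 J2; split; [apply Hmap_HermJacobiForm; auto|].
  intros [_ K1] [_ K2]; split; [apply Hmap_HermJacobiForm; auto|].
  destruct J1 as [_ [_ [_ [c1 [S1 F1]]]]], J2 as [_ [_ [_ [c2 [S2 F2]]]]].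
  (* the coefficients of any expansion of [H] are those computed from [c1] and [c2] *)
  intros coef Hcoef n ab HN.
  rewrite (fourier_h_unique _ _ _ Hcoef (Hmap_fourier k1 k2 phi1 phi2 c1 c2 F1 F2)).
  apply (H_coef_cusp (k1 + k2) m); [exact S1 | exact S2 | exact (K1 c1 F1) | exact (K2 c2 F2) | exact HN].
Qed.
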